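(* Consider the real ODE system $$\frac{dp}{dt}=p\,(pR(v_c)-Q(v_c)),\qquad \frac{dv_c}{dt}=-\frac{p}{4}(1+v_c^2)+\frac12(1-v_c^2),$$ with $R(v)=\frac12\left(\frac1v-v\right)$, $Q(v)=\frac12\left(\frac1v+v\right)$. Let $\lambda=1/100$, $\mu=1/5$, $p_b(v)=\frac{Q(v)+\mu}{R(v)-\lambda}$ for $0<v<\sqrt{1-2\lambda}$, and $\Omega_b=\{(v,p):0<v<\sqrt{1-2\lambda},\ p\ge p_b(v)\}$. If $(v_c(0),p(0))\in\Omega_b$, then, with $D=p(0)/(\lambda p(0)+\mu)$, for all $t>0$ in the existence interval $$p(t)>\frac{\mu De^{\mu t}}{1-\lambda De^{\mu t}},$$ and hence $p(t)\to\infty$ at some finite time $t_c$ with $0<t_c<-\frac{1}{\mu}\ln(\lambda D)$; moreover the quantities $N_2(t)^2=2\pi p(t)^2\left(\frac{1}{v_c(t)}+v_c(t)\right)$ and $N_0(t)=2|p(t)|\max\!\left(\frac{1}{v_c(t)},v_c(t)\right)$ also tend to $\infty$ as $t\to t_c^-$.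
   Context: This system is the form, with dissipation coefficient normalized to $\nu=1$, of the pole-dynamics ODEs for the generalized Constantin–Lax–Majda equation with $a=1/2$, $\sigma=1$, written in the variable $p=\omega_{-2,i}/(v_c(1-v_c^2))$. The quantities $N_2$ and $N_0$ equal the $L^2(-\pi,\pi)$ norm and the Wiener ($\ell^1$ of Fourier coefficients) norm, respectively, of the associated periodic solution $\omega(\cdot,t)$. *)

From Stdlib Require Import Reals.
From Coquelicot Require Import Coquelicot.
Open Scope R_scope.

Definition Rf (v : R) : R := / 2 * (/ v - v).
Definition Qf (v : R) : R := / 2 * (/ v + v).

Definition lam : R := / 100.
Definition mu : R := / 5.

Definition Fp (p v : R) : R := p * (p * Rf v - Qf v).
Definition Fv (p v : R) : R := - (p / 4) * (1 + v ^ 2) + / 2 * (1 - v ^ 2).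

Definition p_b (v : R) : R := (Qf v + mu) / (Rf v - lam).

Definition in_Omega_b (v p : R) : Prop :=
  0 < v < sqrt (1 - 2 * lam) /\ p >= p_b v.

Definition is_solution (p v : R -> R) (T : Rbar) : Prop :=
  Rbar_lt (Finite 0) T /\
  (forall t, 0 <= t -> Rbar_lt (Finite t) T -> v t <> 0) /\
  (forall t, 0 < t -> Rbar_lt (Finite t) T ->
     is_derive p t (Fp (p t) (v t)) /\ is_derive v t (Fv (p t) (v t))) /\
  filterlim p (at_right 0) (locally (p 0)) /\
  filterlim v (at_right 0) (locally (v 0)).

Definition is_maximal_solution (p v : R -> R) (T : Rbar) : Prop :=
  is_solution p v T /\
  forall (T' : Rbar) (p' v' : R -> R),
    Rbar_lt T T' -> is_solution p' v' T' ->
    ~ (forall t, 0 <= t -> Rbar_lt (Finite t) T -> p' t = p t /\ v' t = v t).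

Definition Nl2 (p v : R) : R := sqrt (2 * PI * p ^ 2 * (/ v + v)).
Definition Nwiener (p v : R) : R := 2 * Rabs p * Rmax (/ v) v.

(* Write [p >= p_b v] as [Hb p v >= 0] with [Hb] polynomial in [p] and [v].
   On the curve [Hb = 0] the derivative of [Hb] along the flow is a positive polynomial in
   [v] over a square, so the flow never leaves this region.  Inside it
   [p' >= p (lam p + mu)], so [(1/p + lam/mu) e^(mu t)] decreases; comparing with the
   logistic equation gives the lower bound on [p] and a maximal existence time below
   [- ln (lam D) / mu].  There [p], which increases, must tend to infinity: were it
   bounded, [ln p + k ln v] would keep [v] away from [0], the field would be Lipschitz on
   a compact box, and the Picard-Lindelof theorem would continue the solution past the
   maximal time.  Both norms dominate [p]. *)

From Stdlib Require Import Reals Lra Psatz Classical.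
From Coquelicot Require Import Coquelicot.
Open Scope R_scope.

(** * Calculus on the real line *)

Lemma MVT_open (f df : R -> R) (a b : R) : a < b ->
  (forall x, a < x < b -> is_derive f x (df x)) ->
  (forall x, a <= x <= b -> continuity_pt f x) ->
  exists c, a < c < b /\ f b - f a = df c * (b - a).
Proof.
  intros Hab Hd Hc.
  assert (pr1 : forall c, a < c < b -> derivable_pt f c).
  { intros c Hc'. exists (df c). apply is_derive_Reals. auto. }
  assert (pr2 : forall c, a < c < b -> derivable_pt id c).
  { intros c _. apply derivable_pt_id. }
  destruct (MVT f id a b pr1 pr2 Hab Hc) as [c [P HP]].
  { intros; apply derivable_continuous_pt, derivable_pt_id. }
  exists c; split; auto.
  rewrite (derive_pt_eq_0 f c (df c) (pr1 c P)) in HP by (apply is_derive_Reals; auto).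
  rewrite (derive_pt_eq_0 id c 1 (pr2 c P)) in HP by apply derivable_pt_lim_id.
  unfold id in HP. lra.
Qed.

Lemma incr_of_deriv_pos (f df : R -> R) (a b : R) : a < b ->
  (forall x, a < x < b -> is_derive f x (df x)) ->
  (forall x, a <= x <= b -> continuity_pt f x) ->
  (forall x, a < x < b -> 0 < df x) -> f a < f b.
Proof.
  intros Hab Hd Hc Hp. destruct (MVT_open f df a b Hab Hd Hc) as [c [Hc1 Hc2]].
  specialize (Hp c Hc1). nra.
Qed.

Lemma ge_lin_of_deriv_ge (f df : R -> R) (a b C : R) : a < b ->
  (forall x, a < x < b -> is_derive f x (df x)) ->
  (forall x, a <= x <= b -> continuity_pt f x) ->
  (forall x, a < x < b -> C <= df x) -> f a + C * (b - a) <= f b.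
Proof.
  intros Hab Hd Hc Hp. destruct (MVT_open f df a b Hab Hd Hc) as [c [Hc1 Hc2]].
  specialize (Hp c Hc1). nra.
Qed.

Lemma ball_Rabs (x e y : R) : ball x e y <-> Rabs (y - x) < e.
Proof. reflexivity. Qed.

Lemma continuity_pt_locally_gt0 (f : R -> R) (t : R) : continuity_pt f t -> 0 < f t ->
  locally t (fun s => 0 < f s).
Proof.
  intros Hc Hp. destruct (Hc (f t / 2)) as [d [Hd H]]; [lra|].
  exists (mkposreal d Hd). intros s Hs. rewrite ball_Rabs in Hs.
  destruct (Req_dec s t) as [->|Hne]; [auto|].
  assert (Rabs (f s - f t) < f t / 2) by (apply H; repeat split; auto).
  apply Rabs_def2 in H0. lra.
Qed.

Lemma continuity_pt_ge0_of_left (F : R -> R) (a s : R) : a < s -> continuity_pt F s ->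
  (forall u, a <= u < s -> 0 <= F u) -> 0 <= F s.
Proof.
  intros Has HF HFb. destruct (Rle_lt_dec 0 (F s)) as [|Hneg]; auto.
  assert (Hneg' : locally s (fun u => 0 < - F u)).
  { apply (continuity_pt_locally_gt0 (fun u => - F u)); [|lra].
    apply continuity_pt_opp; auto. }
  destruct Hneg' as [d Hd]. pose proof (cond_pos d).
  set (u := Rmax a (s - d / 2)).
  assert (Hu : a <= u < s) by (unfold u; split; [apply Rmax_l | apply Rmax_lub_lt; lra]).
  assert (0 < - F u).
  { apply Hd. rewrite ball_Rabs. assert (s - d / 2 <= u) by apply Rmax_r.
    apply Rabs_def1; simpl in *; lra. }
  specialize (HFb u Hu). lra.
Qed.

Lemma at_right_gt_of_deriv_pos (f df : R -> R) (s : R) :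
  at_right s (fun x => is_derive f x (df x)) ->
  continuity_pt f s -> continuity_pt df s -> 0 < df s ->
  at_right s (fun u => f s < f u).
Proof.
  intros [e1 Hd] Hfs Hdfs Hdf.
  destruct (continuity_pt_locally_gt0 df s Hdfs Hdf) as [e2 Hpos].
  assert (He : 0 < Rmin e1 e2) by (apply Rmin_glb_lt; apply cond_pos).
  exists (mkposreal _ He). intros u Hu Hsu. rewrite ball_Rabs in Hu. simpl in Hu.
  assert (Hnear : forall x, s < x <= u -> ball s e1 x /\ ball s e2 x).
  { intros x Hx. rewrite !ball_Rabs, Rabs_right by lra.
    pose proof (Rabs_def2 _ _ Hu). pose proof (Rmin_l e1 e2). pose proof (Rmin_r e1 e2). lra. }
  apply (incr_of_deriv_pos f df s u Hsu).
  - intros x Hx. apply Hd; [apply Hnear|]; lra.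
  - intros x [Hx1 Hx2]. destruct (Req_dec x s) as [->|Hne]; auto.
    apply continuity_pt_filterlim, (ex_derive_continuous f x).
    exists (df x). apply Hd; [apply Hnear|]; lra.
  - intros x Hx. apply Hpos, Hnear. lra.
Qed.

Lemma lt_left_of_deriv_pos (f : R -> R) t l : is_derive f t l -> 0 < l ->
  exists d, 0 < d /\ forall s, t - d < s < t -> f s < f t.
Proof.
  intros H Hl. apply is_derive_Reals in H.
  destruct (H (l/2)) as [d Hd]; [lra|].
  exists d; split; [apply cond_pos|]. intros s Hs.
  specialize (Hd (s - t)). replace (t + (s - t)) with s in Hd by ring.
  assert (Hq : (f s - f t) / (s - t) > l / 2).
  { apply Rabs_def2 in Hd; [lra | lra | apply Rabs_def1; lra]. }
  destruct (Rlt_le_dec (f s) (f t)); auto.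
  assert ((f s - f t) / (s - t) <= 0); [|lra].
  apply Rmult_le_0_l; [lra|]. apply Rlt_le, Rinv_lt_0_compat. lra.
Qed.

Lemma real_induction (P : R -> Prop) (b : R) : 0 <= b -> P 0 ->
  (forall s, 0 < s <= b -> (forall u, 0 <= u < s -> P u) -> P s) ->
  (forall s, 0 <= s < b -> (forall u, 0 <= u <= s -> P u) -> at_right s P) ->
  forall s, 0 <= s <= b -> P s.
Proof.
  intros Hb H0 Hcl Hfw.
  set (A := fun t => 0 <= t <= b /\ forall u, 0 <= u <= t -> P u).
  assert (HA0 : A 0). { split; [lra|]. intros u Hu. replace u with 0 by lra. auto. }
  assert (Hbd : bound A). { exists b. intros t [Ht _]. lra. }
  destruct (completeness A Hbd (ex_intro _ 0 HA0)) as [m [Hub Hlub]].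
  assert (Hm0 : 0 <= m) by (apply Hub; auto).
  assert (Hmb : m <= b). { apply Hlub. intros t [Ht _]; lra. }
  assert (Hbelow : forall u, 0 <= u < m -> P u).
  { intros u Hu.
    destruct (classic (exists t, A t /\ u <= t)) as [[t [[_ Ht] Hut]]|Hn].
    - apply Ht; lra.
    - exfalso. assert (m <= u); [|lra]. apply Hlub. intros t Ht.
      destruct (Rle_lt_dec t u); auto. exfalso; apply Hn; exists t; split; auto; lra. }
  assert (HAm : A m).
  { split; [lra|]. intros u Hu. destruct (Rle_lt_dec m u).
    - replace u with m by lra. destruct (Req_dec m 0) as [->|Hne]; auto.
      apply Hcl; [lra|auto].
    - apply Hbelow; lra. }
  assert (Hmb' : m = b).
  { destruct (Rle_lt_dec b m); [lra|].
    destruct (Hfw m ltac:(lra) (proj2 HAm)) as [e He].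
    set (t := Rmin (m + e / 2) b).
    assert (Ht1 : t <= m + e / 2) by apply Rmin_l.
    assert (Ht2 : t <= b) by apply Rmin_r.
    assert (m < t) by (apply Rmin_glb_lt; [pose proof (cond_pos e)|]; lra).
    assert (A t).
    { split; [lra|]. intros u Hu. destruct (Rle_lt_dec u m).
      - apply HAm; lra.
      - apply He; [rewrite ball_Rabs, Rabs_right; pose proof (cond_pos e)|]; lra. }
    assert (t <= m) by (apply Hub; auto). lra. }
  intros s Hs. subst m. apply HAm; lra.
Qed.

(* Solutions are only right-continuous at [0]; extending them constantly to the left
   gives functions continuous at [0] in the two-sided sense of [continuity_pt]. *)
Definition ext0 (f : R -> R) (t : R) : R := f (Rmax 0 t).

Lemma ext0_pos (f : R -> R) t : 0 <= t -> ext0 f t = f t.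
Proof. intros; unfold ext0; rewrite Rmax_right; auto. Qed.

Lemma ext0_locally (f : R -> R) t : 0 < t -> locally t (fun s => ext0 f s = f s).
Proof.
  intros Ht. exists (mkposreal t Ht). intros y Hy. rewrite ball_Rabs in Hy.
  apply ext0_pos. apply Rabs_def2 in Hy. simpl in Hy. lra.
Qed.

Lemma ext0_continuity_0 (f : R -> R) :
  filterlim f (at_right 0) (locally (f 0)) -> continuity_pt (ext0 f) 0.
Proof.
  intros H. apply continuity_pt_filterlim. unfold ext0 at 2.
  rewrite Rmax_left by lra.
  intros P [eps HP]. destruct (H P (ex_intro _ eps HP)) as [d Hd].
  exists d. intros y Hy. unfold ext0. simpl.
  destruct (Rle_lt_dec y 0).
  - rewrite Rmax_left by lra. apply HP, ball_center.
  - rewrite Rmax_right by lra. apply Hd; auto.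
Qed.

Lemma ext0_derive (f : R -> R) t l : 0 < t -> is_derive f t l -> is_derive (ext0 f) t l.
Proof.
  intros Ht H. eapply is_derive_ext_loc; [|exact H].
  eapply filter_imp; [|apply (ext0_locally f t Ht)]. intros; auto.
Qed.

Lemma Rbar_lt_of_le (t s : R) (T : Rbar) : t <= s -> Rbar_lt s T -> Rbar_lt t T.
Proof. intros. apply (Rbar_le_lt_trans _ s); auto. Qed.

Lemma at_right_Rbar_lt (s : R) (T : Rbar) : 0 <= s -> Rbar_lt s T ->
  at_right s (fun x => 0 < x /\ Rbar_lt x T).
Proof.
  intros Hs HsT.
  assert (Hd : exists d : posreal, forall x, x < s + d -> Rbar_lt x T).
  { destruct T as [Tf| |]; simpl in HsT; try contradiction.
    - assert (0 < Tf - s) by lra. exists (mkposreal _ H). simpl. intros; lra.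
    - exists (mkposreal 1 Rlt_0_1). auto. }
  destruct Hd as [d Hd]. exists d. intros x Hx Hsx. rewrite ball_Rabs in Hx.
  apply Rabs_def2 in Hx. split; [lra | apply Hd; lra].
Qed.

Lemma ex_RInt_of_continuity (f : R -> R) a b : a <= b ->
  (forall z, a <= z <= b -> continuity_pt f z) -> ex_RInt f a b.
Proof.
  intros Hab H. apply (@ex_RInt_continuous R_CompleteNormedModule). intros z Hz.
  rewrite Rmin_left, Rmax_right in Hz by lra. apply continuity_pt_filterlim, H; auto.
Qed.

Lemma RInt_abs_le (f : R -> R) a b C : a <= b ->
  (forall z, a <= z <= b -> continuity_pt f z) ->
  (forall z, a <= z <= b -> Rabs (f z) <= C) -> Rabs (RInt f a b) <= (b - a) * C.
Proof. intros Hab Hc Hb. apply abs_RInt_le_const; auto. apply ex_RInt_of_continuity; auto. Qed.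

Lemma RInt_dist_le (f g : R -> R) a b C : a <= b ->
  (forall z, a <= z <= b -> continuity_pt f z) ->
  (forall z, a <= z <= b -> continuity_pt g z) ->
  (forall z, a <= z <= b -> Rabs (f z - g z) <= C) ->
  Rabs (RInt f a b - RInt g a b) <= (b - a) * C.
Proof.
  intros Hab Hf Hg Hb.
  replace (RInt f a b - RInt g a b) with (RInt (fun x => f x - g x) a b).
  - apply RInt_abs_le; auto. intros; apply continuity_pt_minus; auto.
  - apply is_RInt_unique, (@is_RInt_minus R_CompleteNormedModule);
      apply RInt_correct, ex_RInt_of_continuity; auto.
Qed.

Lemma RInt_abs_le_any (f : R -> R) a b C : (forall z, continuity_pt f z) ->
  (forall z, Rabs (f z) <= C) -> Rabs (RInt f a b) <= Rabs (b - a) * C.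
Proof.
  intros Hc Hb. destruct (Rle_lt_dec a b).
  - rewrite (Rabs_right (b - a)) by lra. apply RInt_abs_le; auto.
  - rewrite <- opp_RInt_swap by (apply ex_RInt_of_continuity; auto; lra).
    unfold opp; simpl. rewrite Rabs_Ropp, (Rabs_left (b - a)) by lra.
    replace (- (b - a)) with (a - b) by ring. apply RInt_abs_le; auto; lra.
Qed.

Lemma RInt_sub_Chasles (f : R -> R) a b c : (forall z, continuity_pt f z) ->
  RInt f a c - RInt f a b = RInt f b c.
Proof.
  intros Hf. rewrite <- (RInt_Chasles f a b c); [simpl; unfold plus; simpl; ring | |];
    apply (@ex_RInt_continuous R_CompleteNormedModule); intros; apply continuity_pt_filterlim; auto.
Qed.

Lemma is_derive_RInt_var (f : R -> R) a c t : (forall z, continuity_pt f z) ->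
  is_derive (fun b => c + RInt f a b) t (f t).
Proof.
  intros Hc. apply is_derive_Reals.
  replace (f t) with (0 + f t) by ring.
  apply (derivable_pt_lim_plus (fun _ => c) (fun b => RInt f a b)); [apply derivable_pt_lim_const|].
  apply is_derive_Reals, (@is_derive_RInt R_CompleteNormedModule f (fun b => RInt f a b) a t).
  - apply filter_forall. intros b. apply RInt_correct.
    apply (@ex_RInt_continuous R_CompleteNormedModule); intros; apply continuity_pt_filterlim; auto.
  - apply continuity_pt_filterlim; auto.
Qed.

Lemma continuity_pt_RInt_var (f : R -> R) a c t : (forall z, continuity_pt f z) ->
  continuity_pt (fun b => c + RInt f a b) t.
Proof.
  intros Hc. apply derivable_continuous_pt.
  exists (f t). apply is_derive_Reals, is_derive_RInt_var; auto.
Qed.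

Lemma lipschitz_continuity (f : R -> R) (K : R) : 0 < K ->
  (forall s t, Rabs (f s - f t) <= K * Rabs (s - t)) -> forall t, continuity_pt f t.
Proof.
  intros HK Hl t eps Heps. exists (eps / K). split; [apply Rdiv_lt_0_compat; auto|].
  intros x [_ Hx]. simpl in *. unfold R_dist in *.
  eapply Rle_lt_trans; [apply Hl|].
  apply (Rmult_lt_compat_l K) in Hx; auto. field_simplify in Hx; lra.
Qed.

Lemma locally_in_interval (a b t : R) : a < t < b -> locally t (fun s => a < s < b).
Proof.
  intros Ht. assert (Hp : 0 < Rmin (t - a) (b - t)) by (apply Rmin_glb_lt; lra).
  exists (mkposreal _ Hp). intros y Hy. rewrite ball_Rabs in Hy. simpl in Hy.
  apply Rabs_def2 in Hy. pose proof (Rmin_l (t - a) (b - t)). pose proof (Rmin_r (t - a) (b - t)). lra.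
Qed.

Lemma Rabs_le_inv (a b : R) : Rabs a <= b -> - b <= a <= b.
Proof. unfold Rabs; destruct (Rcase_abs a); lra. Qed.

(* Squeezing between [s n -+ 2 K 2^{-n}], which are adjacent sequences. *)
Lemma cauchy_geom (s : nat -> R) (K : R) : 0 <= K ->
  (forall n, Rabs (s (S n) - s n) <= K * (/ 2) ^ n) ->
  exists l : R, is_lim_seq s l /\ forall n, Rabs (l - s n) <= 2 * K * (/ 2) ^ n.
Proof.
  intros HK Hs.
  set (lo := fun n => s n - 2 * K * (/ 2) ^ n).
  set (up := fun n => s n + 2 * K * (/ 2) ^ n).
  assert (Hq : forall n, 0 <= (/ 2) ^ n) by (intros; apply pow_le; lra).
  assert (Hlo : forall n, lo n <= lo (S n)).
  { intros n; unfold lo; simpl. specialize (Hs n). apply Rabs_le_inv in Hs. specialize (Hq n). nra. }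
  assert (Hup : forall n, up (S n) <= up n).
  { intros n; unfold up; simpl. specialize (Hs n). apply Rabs_le_inv in Hs. specialize (Hq n). nra. }
  assert (Hg : forall c, is_lim_seq (fun n => c * (/ 2) ^ n) 0).
  { intros c. replace (Finite 0) with (Rbar_mult c 0) by (simpl; f_equal; ring).
    apply is_lim_seq_scal_l, is_lim_seq_geom. rewrite Rabs_right; lra. }
  assert (Hdiff : is_lim_seq (fun n => up n - lo n) 0).
  { apply is_lim_seq_ext with (fun n => 4 * K * (/ 2) ^ n); [intros n; unfold up, lo; ring|apply Hg]. }
  destruct (ex_lim_seq_adj lo up Hlo Hup Hdiff) as [[l Hl] [[l' Hl'] Heq]].
  rewrite (is_lim_seq_unique _ _ Hl), (is_lim_seq_unique _ _ Hl') in Heq. injection Heq as <-.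
  exists l. split.
  - apply is_lim_seq_ext with (fun n => lo n + 2 * K * (/ 2) ^ n); [intros n; unfold lo; ring|].
    replace (Finite l) with (Finite (l + 0)) by (f_equal; ring).
    apply is_lim_seq_plus'; auto.
  - assert (Hlo_mono : forall n m, (n <= m)%nat -> lo n <= lo m).
    { intros n m Hnm. induction Hnm; [lra|]. eapply Rle_trans; eauto. }
    assert (Hup_mono : forall n m, (n <= m)%nat -> up m <= up n).
    { intros n m Hnm. induction Hnm; [lra|]. eapply Rle_trans; [apply Hup|]; eauto. }
    assert (Hlu : forall n m, lo n <= up m).
    { intros n m. assert (lo n <= up n) by (unfold lo, up; specialize (Hq n); nra).
      assert (lo m <= up m) by (unfold lo, up; specialize (Hq m); nra).
      destruct (Nat.le_ge_cases n m) as [Hnm|Hnm].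
      - specialize (Hlo_mono n m Hnm). lra.
      - specialize (Hup_mono m n Hnm). lra. }
    intros n.
    assert (H1 : Rbar_le (lo n) l)
      by (apply (is_lim_seq_le (fun _ => lo n) up); auto; apply is_lim_seq_const).
    assert (H2 : Rbar_le l (up n))
      by (apply (is_lim_seq_le lo (fun _ => up n)); auto; apply is_lim_seq_const).
    simpl in H1, H2. unfold lo, up in *. apply Rabs_le. lra.
Qed.

Lemma le_of_geom_close (a b C : R) : (forall n, a <= b + C * (/ 2) ^ n) -> a <= b.
Proof.
  intros H.
  assert (Hg0 : is_lim_seq (fun n => C * (/ 2) ^ n) 0).
  { replace (Finite 0) with (Rbar_mult C 0) by (simpl; f_equal; ring).
    apply is_lim_seq_scal_l, is_lim_seq_geom. rewrite Rabs_right; lra. }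
  assert (Hg : is_lim_seq (fun n => b + C * (/ 2) ^ n) (b + 0)).
  { apply is_lim_seq_plus'; [apply is_lim_seq_const | exact Hg0]. }
  assert (Hle := is_lim_seq_le (fun _ => a) _ _ _ H (is_lim_seq_const _) Hg).
  simpl in Hle. lra.
Qed.

Lemma eq_of_geom_close (a b C : R) : (forall n, Rabs (a - b) <= C * (/ 2) ^ n) -> a = b.
Proof.
  intros H. apply Rminus_diag_uniq, Rabs_eq_0.
  apply Rle_antisym; [|apply Rabs_pos].
  apply (le_of_geom_close _ _ C). intros n. rewrite Rplus_0_l. apply H.
Qed.

Lemma eq_RInt_of_derive (f df : R -> R) a b : a <= b ->
  (forall x, a <= x <= b -> is_derive f x (df x)) ->
  (forall x, a <= x <= b -> continuity_pt df x) ->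
  f b = f a + RInt df a b.
Proof.
  intros Hab Hd Hc.
  rewrite (is_RInt_unique _ _ _ (minus (f b) (f a))).
  - unfold minus, plus, opp; simpl. ring.
  - apply (@is_RInt_derive R_CompleteNormedModule f); intros x Hx;
      rewrite Rmin_left, Rmax_right in Hx by lra;
      [apply Hd | apply continuity_pt_filterlim, Hc]; auto.
Qed.

(** * Picard-Lindelof for planar systems *)

Definition in_box (a1 a2 b1 b2 a b : R) : Prop := a1 <= a <= a2 /\ b1 <= b <= b2.

Record lipschitz_field (F1 F2 : R -> R -> R) (a1 a2 b1 b2 L M : R) : Prop := {
  lf_L_pos : 0 < L;
  lf_M_pos : 0 < M;
  lf_continuity : forall (f g : R -> R) t, continuity_pt f t -> continuity_pt g t ->
    in_box a1 a2 b1 b2 (f t) (g t) ->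
    continuity_pt (fun s => F1 (f s) (g s)) t /\ continuity_pt (fun s => F2 (f s) (g s)) t;
  lf_bound : forall a b, in_box a1 a2 b1 b2 a b -> Rabs (F1 a b) <= M /\ Rabs (F2 a b) <= M;
  lf_lipschitz : forall a b a' b', in_box a1 a2 b1 b2 a b -> in_box a1 a2 b1 b2 a' b' ->
    Rabs (F1 a b - F1 a' b') <= L * (Rabs (a - a') + Rabs (b - b')) /\
    Rabs (F2 a b - F2 a' b') <= L * (Rabs (a - a') + Rabs (b - b'))
}.

Definition clamp (t0 h s : R) : R := Rmax t0 (Rmin s (t0 + h)).

Lemma clamp_in t0 h s : 0 < h -> t0 <= clamp t0 h s <= t0 + h.
Proof. intros Hh; unfold clamp. split; [apply Rmax_l | apply Rmax_lub; [lra | apply Rmin_r]]. Qed.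

Lemma clamp_id t0 h s : t0 <= s <= t0 + h -> clamp t0 h s = s.
Proof. intros Hs; unfold clamp. rewrite Rmin_left, Rmax_right by lra. auto. Qed.

Lemma clamp_lipschitz t0 h s s' : 0 < h -> Rabs (clamp t0 h s - clamp t0 h s') <= Rabs (s - s').
Proof.
  intros Hh. unfold clamp, Rmax, Rmin.
  destruct (Rle_dec s (t0 + h)); destruct (Rle_dec s' (t0 + h));
  repeat (match goal with |- context [Rle_dec ?a ?b] => destruct (Rle_dec a b) end);
  unfold Rabs; repeat (match goal with |- context [Rcase_abs ?a] => destruct (Rcase_abs a) end); lra.
Qed.

Lemma continuity_pt_clamp_comp (f : R -> R) t0 h s : 0 < h -> (forall z, continuity_pt f z) ->
  continuity_pt (fun x => f (clamp t0 h x)) s.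
Proof.
  intros Hh Hf. apply (continuity_pt_comp (clamp t0 h) f s); [|apply Hf].
  apply (lipschitz_continuity _ 1); [lra|]. intros; rewrite Rmult_1_l; apply clamp_lipschitz; auto.
Qed.

Section Picard.

Variables (F1 F2 : R -> R -> R) (a1 a2 b1 b2 L M t0 h x0 y0 r : R).
Hypothesis HF : lipschitz_field F1 F2 a1 a2 b1 b2 L M.
Hypotheses (Hr : 0 < r) (Hh : 0 < h) (HMh : M * h <= r) (HLh : 4 * L * h <= 1).
Hypotheses (Ha1 : a1 <= x0 - r) (Ha2 : x0 + r <= a2) (Hb1 : b1 <= y0 - r) (Hb2 : y0 + r <= b2).

Local Notation cl := (clamp t0 h).
Local Notation box := (in_box a1 a2 b1 b2).

(* Iterates are read at [clamp t0 h s], which keeps them continuous on all of [R]. *)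
Fixpoint picard_iter (n : nat) : (R -> R) * (R -> R) :=
  match n with
  | O => (fun _ => x0, fun _ => y0)
  | S n => let XY := picard_iter n in
      (fun t => x0 + RInt (fun s => F1 (fst XY (cl s)) (snd XY (cl s))) t0 t,
       fun t => y0 + RInt (fun s => F2 (fst XY (cl s)) (snd XY (cl s))) t0 t)
  end.

Definition iterX (n : nat) : R -> R := fst (picard_iter n).
Definition iterY (n : nat) : R -> R := snd (picard_iter n).
Definition integrand1 (n : nat) (s : R) : R := F1 (iterX n (cl s)) (iterY n (cl s)).
Definition integrand2 (n : nat) (s : R) : R := F2 (iterX n (cl s)) (iterY n (cl s)).

Lemma iterX_S n t : iterX (S n) t = x0 + RInt (integrand1 n) t0 t.
Proof. reflexivity. Qed.

Lemma iterY_S n t : iterY (S n) t = y0 + RInt (integrand2 n) t0 t.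
Proof. reflexivity. Qed.

Lemma in_box_of_near a b : Rabs (a - x0) <= r -> Rabs (b - y0) <= r -> box a b.
Proof. intros Ha Hb. apply Rabs_le_inv in Ha; apply Rabs_le_inv in Hb. unfold in_box; lra. Qed.

Lemma integrand_of_iter n :
  (forall t, continuity_pt (iterX n) t /\ continuity_pt (iterY n) t) ->
  (forall t, t0 <= t <= t0 + h ->
     Rabs (iterX n t - x0) <= M * (t - t0) /\ Rabs (iterY n t - y0) <= M * (t - t0)) ->
  (forall s, box (iterX n (cl s)) (iterY n (cl s))) /\
  (forall s, continuity_pt (integrand1 n) s /\ continuity_pt (integrand2 n) s).
Proof.
  intros Hc Hd.
  assert (Hbox : forall s, box (iterX n (cl s)) (iterY n (cl s))).
  { intros s. pose proof (clamp_in t0 h s Hh).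
    destruct (Hd (cl s)) as [H1 H2]; auto. apply in_box_of_near; nra. }
  split; auto. intros s.
  apply (lf_continuity _ _ _ _ _ _ _ _ HF (fun x => iterX n (cl x)) (fun x => iterY n (cl x)));
    auto; apply continuity_pt_clamp_comp; auto; apply Hc.
Qed.

Lemma iter_regular n :
  (forall t, continuity_pt (iterX n) t /\ continuity_pt (iterY n) t) /\
  (forall t, t0 <= t <= t0 + h ->
     Rabs (iterX n t - x0) <= M * (t - t0) /\ Rabs (iterY n t - y0) <= M * (t - t0)).
Proof.
  induction n as [|n [IHc IHd]].
  - split.
    + intros t. split; apply continuity_pt_const; intros ? ?; reflexivity.
    + intros t Ht. unfold iterX, iterY; simpl. rewrite !Rminus_diag, Rabs_R0.
      pose proof (lf_M_pos _ _ _ _ _ _ _ _ HF). split; nra.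
  - destruct (integrand_of_iter n IHc IHd) as [Hbox HI].
    split.
    + intros t. split; [change (continuity_pt (fun t => x0 + RInt (integrand1 n) t0 t) t) |
                         change (continuity_pt (fun t => y0 + RInt (integrand2 n) t0 t) t)];
        apply continuity_pt_RInt_var; apply HI.
    + intros t Ht. rewrite iterX_S, iterY_S, !Rplus_minus_l.
      split; rewrite Rmult_comm; apply RInt_abs_le; try lra; intros; try apply HI;
        apply (lf_bound _ _ _ _ _ _ _ _ HF), Hbox.
Qed.

Lemma iter_in_box n s : box (iterX n (cl s)) (iterY n (cl s)).
Proof. destruct (iter_regular n). apply (integrand_of_iter n); auto. Qed.

Lemma integrand_continuity n s : continuity_pt (integrand1 n) s /\ continuity_pt (integrand2 n) s.
Proof. destruct (iter_regular n). apply (integrand_of_iter n); auto. Qed.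

Lemma integrand_bound n s : Rabs (integrand1 n s) <= M /\ Rabs (integrand2 n s) <= M.
Proof. apply (lf_bound _ _ _ _ _ _ _ _ HF), iter_in_box. Qed.

(* [4 L h <= 1] makes the Picard map a contraction with ratio [1/2]. *)
Lemma iter_step n t : t0 <= t <= t0 + h ->
  Rabs (iterX (S n) t - iterX n t) + Rabs (iterY (S n) t - iterY n t) <= 2 * r * (/ 2) ^ n.
Proof.
  revert t. induction n as [|n IH]; intros t Ht.
  - simpl pow. destruct (proj2 (iter_regular 1) t Ht).
    change (iterX 0 t) with x0. change (iterY 0 t) with y0. nra.
  - rewrite (iterX_S (S n)), (iterX_S n), (iterY_S (S n)), (iterY_S n), !Rminus_plus_l_l.
    set (q := (/ 2) ^ n). assert (Hq : 0 < q) by (apply pow_lt; lra).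
    assert (Hs : forall s, t0 <= s <= t ->
      Rabs (integrand1 (S n) s - integrand1 n s) <= L * (2 * r * q) /\
      Rabs (integrand2 (S n) s - integrand2 n s) <= L * (2 * r * q)).
    { intros s Hs. specialize (IH (cl s) (clamp_in t0 h s Hh)).
      destruct (lf_lipschitz _ _ _ _ _ _ _ _ HF _ _ _ _ (iter_in_box (S n) s) (iter_in_box n s))
        as [H1 H2].
      pose proof (lf_L_pos _ _ _ _ _ _ _ _ HF).
      split; (eapply Rle_trans; [eassumption|]); apply Rmult_le_compat_l; unfold q; lra. }
    assert (B1 := RInt_dist_le (integrand1 (S n)) (integrand1 n) t0 t (L * (2 * r * q))
                    ltac:(lra) (fun z _ => proj1 (integrand_continuity _ z))
                    (fun z _ => proj1 (integrand_continuity _ z)) (fun z Hz => proj1 (Hs z Hz))).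
    assert (B2 := RInt_dist_le (integrand2 (S n)) (integrand2 n) t0 t (L * (2 * r * q))
                    ltac:(lra) (fun z _ => proj2 (integrand_continuity _ z))
                    (fun z _ => proj2 (integrand_continuity _ z)) (fun z Hz => proj2 (Hs z Hz))).
    simpl pow. fold q.
    assert ((t - t0) * (L * (2 * r * q)) <= r * q / 2).
    { pose proof (lf_L_pos _ _ _ _ _ _ _ _ HF).
      assert (4 * L * (t - t0) <= 1) by nra. assert (0 < r * q) by nra. nra. }
    lra.
Qed.

Definition picX (t : R) : R := real (Lim_seq (fun n => iterX n (cl t))).
Definition picY (t : R) : R := real (Lim_seq (fun n => iterY n (cl t))).

Lemma pic_approx n t :
  Rabs (picX t - iterX n (cl t)) <= 4 * r * (/ 2) ^ n /\
  Rabs (picY t - iterY n (cl t)) <= 4 * r * (/ 2) ^ n.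
Proof.
  assert (Hstep := fun m => iter_step m (cl t) (clamp_in t0 h t Hh)).
  destruct (cauchy_geom (fun m => iterX m (cl t)) (2 * r)) as [lX [HlX HbX]]; [lra| |].
  { intros m. specialize (Hstep m). pose proof (Rabs_pos (iterY (S m) (cl t) - iterY m (cl t))). lra. }
  destruct (cauchy_geom (fun m => iterY m (cl t)) (2 * r)) as [lY [HlY HbY]]; [lra| |].
  { intros m. specialize (Hstep m). pose proof (Rabs_pos (iterX (S m) (cl t) - iterX m (cl t))). lra. }
  unfold picX, picY. rewrite (is_lim_seq_unique _ _ HlX), (is_lim_seq_unique _ _ HlY). simpl.
  specialize (HbX n). specialize (HbY n). split; lra.
Qed.

Lemma pic_dev t :
  Rabs (picX t - x0) <= M * (cl t - t0) /\ Rabs (picY t - y0) <= M * (cl t - t0).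
Proof.
  split; apply (le_of_geom_close _ _ (4 * r)); intros n;
    destruct (proj2 (iter_regular n) (cl t) (clamp_in t0 h t Hh)) as [H1 H2];
    destruct (pic_approx n t) as [A1 A2].
  - pose proof (Rabs_triang (picX t - iterX n (cl t)) (iterX n (cl t) - x0)) as Ht.
    replace (picX t - iterX n (cl t) + (iterX n (cl t) - x0)) with (picX t - x0) in Ht by ring.
    lra.
  - pose proof (Rabs_triang (picY t - iterY n (cl t)) (iterY n (cl t) - y0)) as Ht.
    replace (picY t - iterY n (cl t) + (iterY n (cl t) - y0)) with (picY t - y0) in Ht by ring.
    lra.
Qed.

Lemma pic_in_box t : box (picX t) (picY t).
Proof.
  destruct (pic_dev t). pose proof (clamp_in t0 h t Hh).
  pose proof (lf_M_pos _ _ _ _ _ _ _ _ HF). apply in_box_of_near; nra.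
Qed.

Lemma iter_lipschitz n s t :
  Rabs (iterX n (cl t) - iterX n (cl s)) <= M * Rabs (t - s) /\
  Rabs (iterY n (cl t) - iterY n (cl s)) <= M * Rabs (t - s).
Proof.
  pose proof (clamp_lipschitz t0 h t s Hh). pose proof (Rabs_pos (t - s)).
  pose proof (lf_M_pos _ _ _ _ _ _ _ _ HF).
  destruct n as [|n].
  - unfold iterX, iterY; simpl. rewrite !Rminus_diag, Rabs_R0. split; nra.
  - rewrite !iterX_S, !iterY_S, !Rminus_plus_l_l, !RInt_sub_Chasles
      by (intros; apply integrand_continuity).
    split; (eapply Rle_trans; [apply RInt_abs_le_any;
      [intros; apply integrand_continuity | intros; apply integrand_bound]|]);
      rewrite Rmult_comm; apply Rmult_le_compat_l; lra.
Qed.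

Lemma pic_continuity t : continuity_pt picX t /\ continuity_pt picY t.
Proof.
  pose proof (lf_M_pos _ _ _ _ _ _ _ _ HF).
  split; revert t; apply (lipschitz_continuity _ M); auto; intros s t;
    apply (le_of_geom_close _ _ (8 * r)); intros n;
    destruct (iter_lipschitz n t s) as [H1 H2];
    destruct (pic_approx n s) as [As1 As2]; destruct (pic_approx n t) as [At1 At2].
  - pose proof (Rabs_triang (picX s - iterX n (cl s)) (iterX n (cl s) - picX t)) as T1.
    pose proof (Rabs_triang (iterX n (cl s) - iterX n (cl t)) (iterX n (cl t) - picX t)) as T2.
    replace (picX s - iterX n (cl s) + (iterX n (cl s) - picX t)) with (picX s - picX t) in T1 by ring.
    replace (iterX n (cl s) - iterX n (cl t) + (iterX n (cl t) - picX t))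
      with (iterX n (cl s) - picX t) in T2 by ring.
    rewrite Rabs_minus_sym in At1. lra.
  - pose proof (Rabs_triang (picY s - iterY n (cl s)) (iterY n (cl s) - picY t)) as T1.
    pose proof (Rabs_triang (iterY n (cl s) - iterY n (cl t)) (iterY n (cl t) - picY t)) as T2.
    replace (picY s - iterY n (cl s) + (iterY n (cl s) - picY t)) with (picY s - picY t) in T1 by ring.
    replace (iterY n (cl s) - iterY n (cl t) + (iterY n (cl t) - picY t))
      with (iterY n (cl s) - picY t) in T2 by ring.
    rewrite Rabs_minus_sym in At2. lra.
Qed.

Definition pic_field1 (s : R) : R := F1 (picX s) (picY s).
Definition pic_field2 (s : R) : R := F2 (picX s) (picY s).

Lemma pic_field_continuity s : continuity_pt pic_field1 s /\ continuity_pt pic_field2 s.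
Proof.
  apply (lf_continuity _ _ _ _ _ _ _ _ HF picX picY);
    [apply pic_continuity | apply pic_continuity | apply pic_in_box].
Qed.

Lemma pic_integral t : t0 <= t <= t0 + h ->
  picX t = x0 + RInt pic_field1 t0 t /\ picY t = y0 + RInt pic_field2 t0 t.
Proof.
  intros Ht. pose proof (lf_L_pos _ _ _ _ _ _ _ _ HF).
  assert (Hclt : cl t = t) by (apply clamp_id; auto).
  assert (Hint : forall n s, t0 <= s <= t ->
    Rabs (integrand1 n s - pic_field1 s) <= L * (8 * r * (/ 2) ^ n) /\
    Rabs (integrand2 n s - pic_field2 s) <= L * (8 * r * (/ 2) ^ n)).
  { intros n s _. destruct (pic_approx n s) as [A1 A2].
    rewrite Rabs_minus_sym in A1, A2.
    destruct (lf_lipschitz _ _ _ _ _ _ _ _ HF _ _ _ _ (iter_in_box n s) (pic_in_box s)) as [H1 H2].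
    split; (eapply Rle_trans; [eassumption|]); apply Rmult_le_compat_l; lra. }
  assert (Hsmall : forall n, (t - t0) * (L * (8 * r * (/ 2) ^ n)) <= 2 * r * (/ 2) ^ n).
  { intros n. pose proof (pow_lt (/ 2) n ltac:(lra)).
    assert (HtL : (t - t0) * L <= 1 / 4) by nra.
    assert (0 <= (1 / 4 - (t - t0) * L) * (8 * r * (/ 2) ^ n)) by (apply Rmult_le_pos; nra).
    nra. }
  split; apply (eq_of_geom_close _ _ (4 * r)); intros n;
    destruct (pic_approx (S n) t) as [A1 A2]; rewrite Hclt in A1, A2; simpl pow in A1, A2.
  - assert (B := RInt_dist_le (integrand1 n) pic_field1 t0 t _ ltac:(lra)
      (fun z _ => proj1 (integrand_continuity n z)) (fun z _ => proj1 (pic_field_continuity z))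
      (fun z Hz => proj1 (Hint n z Hz))).
    rewrite iterX_S in A1. specialize (Hsmall n).
    set (I := RInt (integrand1 n) t0 t) in *. set (J := RInt pic_field1 t0 t) in *.
    pose proof (Rabs_triang (picX t - (x0 + I)) (I - J)) as Tr.
    replace (picX t - (x0 + I) + (I - J)) with (picX t - (x0 + J)) in Tr by ring. lra.
  - assert (B := RInt_dist_le (integrand2 n) pic_field2 t0 t _ ltac:(lra)
      (fun z _ => proj2 (integrand_continuity n z)) (fun z _ => proj2 (pic_field_continuity z))
      (fun z Hz => proj2 (Hint n z Hz))).
    rewrite iterY_S in A2. specialize (Hsmall n).
    set (I := RInt (integrand2 n) t0 t) in *. set (J := RInt pic_field2 t0 t) in *.
    pose proof (Rabs_triang (picY t - (y0 + I)) (I - J)) as Tr.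
    replace (picY t - (y0 + I) + (I - J)) with (picY t - (y0 + J)) in Tr by ring. lra.
Qed.

Lemma pic_derive t : t0 < t < t0 + h ->
  is_derive picX t (F1 (picX t) (picY t)) /\ is_derive picY t (F2 (picX t) (picY t)).
Proof.
  intros Ht.
  assert (Hloc : locally t (fun s => picX s = x0 + RInt pic_field1 t0 s /\
                                     picY s = y0 + RInt pic_field2 t0 s)).
  { eapply filter_imp; [|apply (locally_in_interval t0 (t0 + h) t Ht)].
    intros s Hs. apply pic_integral. lra. }
  change (F1 (picX t) (picY t)) with (pic_field1 t).
  change (F2 (picX t) (picY t)) with (pic_field2 t).
  split; [apply (is_derive_ext_loc (fun s => x0 + RInt pic_field1 t0 s)) |
          apply (is_derive_ext_loc (fun s => y0 + RInt pic_field2 t0 s))];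
    try (apply is_derive_RInt_var; intros; apply pic_field_continuity);
    (eapply filter_imp; [|exact Hloc]); intros s Hs; symmetry; apply Hs.
Qed.

Section Uniqueness.

Variables (p q : R -> R) (t1 : R).
Hypothesis Ht1 : t0 < t1 <= t0 + h.
Hypothesis Hpq : forall t, t0 <= t < t1 -> box (p t) (q t) /\
  is_derive p t (F1 (p t) (q t)) /\ is_derive q t (F2 (p t) (q t)).
Hypotheses (Hp0 : p t0 = x0) (Hq0 : q t0 = y0).

Lemma sol_field_continuity t : t0 <= t < t1 ->
  continuity_pt (fun s => F1 (p s) (q s)) t /\ continuity_pt (fun s => F2 (p s) (q s)) t.
Proof.
  intros Ht. destruct (Hpq t Ht) as [Hbox [D1 D2]].
  apply (lf_continuity _ _ _ _ _ _ _ _ HF); auto; apply continuity_pt_filterlim;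
    [apply (ex_derive_continuous p t) | apply (ex_derive_continuous q t)]; eexists; eauto.
Qed.

Lemma sol_integral t : t0 <= t < t1 ->
  p t = x0 + RInt (fun s => F1 (p s) (q s)) t0 t /\
  q t = y0 + RInt (fun s => F2 (p s) (q s)) t0 t.
Proof.
  intros Ht. rewrite <- Hp0, <- Hq0.
  split; apply eq_RInt_of_derive; try lra; intros x Hx;
    first [apply Hpq | apply sol_field_continuity]; lra.
Qed.

Lemma sol_near_iter n t : t0 <= t < t1 ->
  Rabs (p t - iterX n t) + Rabs (q t - iterY n t) <= ((a2 - a1) + (b2 - b1)) * (/ 2) ^ n.
Proof.
  set (K0 := (a2 - a1) + (b2 - b1)).
  revert t. induction n as [|n IH]; intros t Ht.
  - simpl pow. unfold iterX, iterY; simpl. destruct (Hpq t Ht) as [[Hi1 Hi2] _].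
    unfold K0. rewrite Rmult_1_r. apply Rplus_le_compat; apply Rabs_le; lra.
  - destruct (sol_integral t Ht) as [P1 P2]. rewrite P1, P2, iterX_S, iterY_S, !Rminus_plus_l_l.
    set (qq := (/ 2) ^ n). assert (Hq : 0 < qq) by (apply pow_lt; lra).
    pose proof (lf_L_pos _ _ _ _ _ _ _ _ HF).
    assert (Hs : forall s, t0 <= s <= t ->
      Rabs (F1 (p s) (q s) - integrand1 n s) <= L * (K0 * qq) /\
      Rabs (F2 (p s) (q s) - integrand2 n s) <= L * (K0 * qq)).
    { intros s Hs. unfold integrand1, integrand2. rewrite clamp_id by lra.
      specialize (IH s ltac:(lra)).
      pose proof (iter_in_box n s) as Hb. rewrite clamp_id in Hb by lra.
      destruct (lf_lipschitz _ _ _ _ _ _ _ _ HF _ _ _ _ (proj1 (Hpq s ltac:(lra))) Hb) as [H1 H2].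
      split; (eapply Rle_trans; [eassumption|]); apply Rmult_le_compat_l; unfold qq; lra. }
    assert (B1 := RInt_dist_le _ (integrand1 n) t0 t _ ltac:(lra)
      (fun z Hz => proj1 (sol_field_continuity z ltac:(lra))) (fun z _ => proj1 (integrand_continuity n z))
      (fun z Hz => proj1 (Hs z Hz))).
    assert (B2 := RInt_dist_le _ (integrand2 n) t0 t _ ltac:(lra)
      (fun z Hz => proj2 (sol_field_continuity z ltac:(lra))) (fun z _ => proj2 (integrand_continuity n z))
      (fun z Hz => proj2 (Hs z Hz))).
    simpl pow. fold qq.
    assert (0 <= K0) by (destruct (Hpq t Ht) as [[Hi1 Hi2] _]; unfold K0; lra).
    assert ((t - t0) * (L * (K0 * qq)) <= K0 * qq / 4).
    { assert (HtL : (t - t0) * L <= 1 / 4) by nra.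
      assert (0 <= (1 / 4 - (t - t0) * L) * (K0 * qq)) by (apply Rmult_le_pos; nra).
      nra. }
    lra.
Qed.

Lemma pic_unique t : t0 <= t < t1 -> p t = picX t /\ q t = picY t.
Proof.
  intros Ht. assert (Hclt : cl t = t) by (apply clamp_id; lra).
  split; apply (eq_of_geom_close _ _ ((a2 - a1) + (b2 - b1) + 4 * r)); intros n;
    pose proof (sol_near_iter n t Ht) as Hn; destruct (pic_approx n t) as [A1 A2];
    rewrite Hclt, Rabs_minus_sym in A1, A2;
    pose proof (Rabs_pos (p t - iterX n t)); pose proof (Rabs_pos (q t - iterY n t)).
  - pose proof (Rabs_triang (p t - iterX n t) (iterX n t - picX t)) as Tr.
    replace (p t - iterX n t + (iterX n t - picX t)) with (p t - picX t) in Tr by ring. lra.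
  - pose proof (Rabs_triang (q t - iterY n t) (iterY n t - picY t)) as Tr.
    replace (q t - iterY n t + (iterY n t - picY t)) with (q t - picY t) in Tr by ring. lra.
Qed.

End Uniqueness.

End Picard.

Theorem picard_lindelof (F1 F2 : R -> R -> R) (a1 a2 b1 b2 L M t0 h x0 y0 r : R) :
  lipschitz_field F1 F2 a1 a2 b1 b2 L M ->
  0 < r -> 0 < h -> M * h <= r -> 4 * L * h <= 1 ->
  a1 <= x0 - r -> x0 + r <= a2 -> b1 <= y0 - r -> y0 + r <= b2 ->
  exists X Y : R -> R,
    (forall t, in_box a1 a2 b1 b2 (X t) (Y t)) /\
    (forall t, t0 < t < t0 + h ->
       is_derive X t (F1 (X t) (Y t)) /\ is_derive Y t (F2 (X t) (Y t))) /\
    (forall (p q : R -> R) t1, t0 < t1 <= t0 + h ->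
       (forall t, t0 <= t < t1 -> in_box a1 a2 b1 b2 (p t) (q t) /\
          is_derive p t (F1 (p t) (q t)) /\ is_derive q t (F2 (p t) (q t))) ->
       p t0 = x0 -> q t0 = y0 ->
       forall t, t0 <= t < t1 -> p t = X t /\ q t = Y t).
Proof.
  intros HF Hr Hh HMh HLh Ha1 Ha2 Hb1 Hb2.
  exists (picX F1 F2 t0 h x0 y0), (picY F1 F2 t0 h x0 y0).
  split; [|split].
  - intros t. exact (pic_in_box F1 F2 a1 a2 b1 b2 L M t0 h x0 y0 r HF Hr Hh HMh HLh Ha1 Ha2 Hb1 Hb2 t).
  - intros t Ht.
    exact (pic_derive F1 F2 a1 a2 b1 b2 L M t0 h x0 y0 r HF Hr Hh HMh HLh Ha1 Ha2 Hb1 Hb2 t Ht).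
  - intros p q t1 Ht1 Hpq Hp0 Hq0 t Ht.
    exact (pic_unique F1 F2 a1 a2 b1 b2 L M t0 h x0 y0 r HF Hr Hh HMh HLh Ha1 Ha2 Hb1 Hb2
             p q t1 Ht1 Hpq Hp0 Hq0 t Ht).
Qed.

(** * The region above [p_b] *)

(* For [0 < v], [Rf v - lam = bnd_den v / (2 v)] and [Qf v + mu = bnd_num v / (2 v)],
   so [p_b = bnd_num / bnd_den] and, where [bnd_den > 0], [p >= p_b] reads [0 <= Hb p v]. *)
Definition bnd_den (v : R) : R := 1 - v ^ 2 - v / 50.
Definition bnd_num (v : R) : R := 1 + v ^ 2 + 2 * v / 5.
Definition Hb (p v : R) : R := bnd_den v * p - bnd_num v.

(* The derivative of [Hb] along the vector field [(Fp, Fv)]. *)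
Definition Hb_flow (p v : R) : R :=
  bnd_den v * Fp p v + ((-2 * v - 1/50) * p - (2 * v + 2/5)) * Fv p v.

(* [4 bnd_den^2 * Hb_flow] restricted to the curve [p = p_b v]. *)
Definition boundary_poly (v : R) : R :=
  21/50 - 437/125*v + 19583/6250*v^2 + 14798/625*v^3
  + 15413/6250*v^4 - 443/125*v^5 + 19/50*v^6.

Lemma boundary_poly_pos v : 0 <= v <= 1 -> 0 < boundary_poly v.
Proof.
  intros Hv; unfold boundary_poly.
  destruct (Rle_lt_dec v (1/10)); [nra|].
  destruct (Rle_lt_dec v (3/20)); [nra|].
  destruct (Rle_lt_dec v (17/100)); [nra|].
  destruct (Rle_lt_dec v (19/100)); [nra|].
  destruct (Rle_lt_dec v (1/5)); [nra|].
  destruct (Rle_lt_dec v (3/10)); [nra|].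
  destruct (Rle_lt_dec v (1/2)); nra.
Qed.

Lemma Hb_ge0_bnd_den_gt0 p v : 0 < v -> 0 < p -> 0 <= Hb p v -> 0 < bnd_den v /\ v < 1.
Proof.
  unfold Hb, bnd_den, bnd_num; intros Hv Hp H.
  assert (0 < 1 - v ^ 2 - v / 50) by nra.
  split; nra.
Qed.

Lemma Hb_flow_boundary p v : 0 < v -> bnd_den v <> 0 -> p = bnd_num v / bnd_den v ->
  Hb_flow p v = boundary_poly v / (4 * bnd_den v ^ 2).
Proof.
  intros Hv Hc ->. unfold Hb_flow, Fp, Fv, Rf, Qf, boundary_poly, bnd_num.
  unfold bnd_den in *. field. split; lra.
Qed.

Lemma Hb_flow_gt0 p v : 0 < v -> 0 < p -> Hb p v = 0 -> 0 < Hb_flow p v.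
Proof.
  intros Hv Hp H.
  destruct (Hb_ge0_bnd_den_gt0 p v Hv Hp (Req_le _ _ (eq_sym H))) as [Hc Hv1].
  rewrite (Hb_flow_boundary p v Hv); [| lra |].
  - apply Rdiv_lt_0_compat; [apply boundary_poly_pos; lra | nra].
  - unfold Hb in H. field_simplify_eq; lra.
Qed.

Lemma Fp_sub_logistic p v : 0 < v ->
  Fp p v - p * (lam * p + mu) = p * Hb p v / (2 * v).
Proof. intros Hv. unfold Fp, Hb, Rf, Qf, lam, mu, bnd_den, bnd_num. field. lra. Qed.

Lemma in_Omega_b_Hb v p : in_Omega_b v p -> 0 < v /\ 1 < p /\ 0 <= Hb p v.
Proof.
  unfold in_Omega_b, p_b, Rf, Qf, lam, mu. intros [[Hv0 Hv1] Hp].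
  assert (Hs : sqrt (1 - 2 * / 100) < 99/100).
  { rewrite <- (sqrt_pow2 (99/100)) by lra. apply sqrt_lt_1_alt. lra. }
  assert (Hc : 0 < bnd_den v) by (unfold bnd_den; nra).
  assert (Hpb : (/ 2 * (/ v + v) + / 5) / (/ 2 * (/ v - v) - / 100) = bnd_num v / bnd_den v).
  { unfold bnd_den, bnd_num in *. field. split; lra. }
  rewrite Hpb in Hp. apply Rge_le in Hp.
  assert (Hnum : bnd_den v < bnd_num v) by (unfold bnd_den, bnd_num; nra).
  assert (Hmul : bnd_num v <= bnd_den v * p).
  { apply (Rmult_le_compat_l (bnd_den v)) in Hp; [|lra].
    field_simplify in Hp; lra. }
  unfold Hb. repeat split; try lra; nra.
Qed.

Lemma Hb_derive (f g : R -> R) (x df dg : R) : is_derive f x df -> is_derive g x dg ->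
  is_derive (fun s => Hb (f s) (g s)) x
    (bnd_den (g x) * df + ((-2 * g x - 1/50) * f x - (2 * g x + 2/5)) * dg).
Proof.
  intros Hf Hg. unfold Hb, bnd_den, bnd_num. auto_derive.
  - repeat split; eexists; eauto.
  - change (fun y => f y) with f. change (fun y => g y) with g.
    rewrite (is_derive_unique _ _ _ Hf), (is_derive_unique _ _ _ Hg). field.
Qed.

Lemma Hb_continuity (f g : R -> R) x : continuity_pt f x -> continuity_pt g x ->
  continuity_pt (fun s => Hb (f s) (g s)) x.
Proof. intros Hf Hg. unfold Hb, bnd_den, bnd_num. reg. Qed.

Lemma Hb_flow_continuity (f g : R -> R) x : continuity_pt f x -> continuity_pt g x ->
  g x <> 0 -> continuity_pt (fun s => Hb_flow (f s) (g s)) x.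
Proof. intros Hf Hg Hg0. unfold Hb_flow, Fp, Fv, Rf, Qf, bnd_den. reg. Qed.

Definition Ulog (p : R -> R) (t : R) : R := (/ p t + lam / mu) * exp (mu * t).

Definition in_Hb_region (p v : R) : Prop := 0 < v /\ 0 < p /\ 0 <= Hb p v.

Section Solution.

Variables (p v : R -> R) (T : Rbar).
Hypothesis Hsol : is_solution p v T.
Hypothesis Hom : in_Omega_b (v 0) (p 0).

Lemma solution_derive t : 0 < t -> Rbar_lt t T ->
  is_derive (ext0 p) t (Fp (ext0 p t) (ext0 v t)) /\
  is_derive (ext0 v) t (Fv (ext0 p t) (ext0 v t)).
Proof.
  intros Ht HtT. destruct Hsol as [_ [_ [Hd _]]]. rewrite !ext0_pos by lra.
  destruct (Hd t Ht HtT). split; apply ext0_derive; auto.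
Qed.

Lemma solution_continuity t : 0 <= t -> Rbar_lt t T ->
  continuity_pt (ext0 p) t /\ continuity_pt (ext0 v) t.
Proof.
  intros Ht HtT. destruct (Req_dec t 0) as [->|Hne].
  - destruct Hsol as [_ [_ [_ [Hp Hv]]]]. split; apply ext0_continuity_0; auto.
  - destruct (solution_derive t ltac:(lra) HtT) as [Dp Dv].
    split; apply continuity_pt_filterlim; [apply (ex_derive_continuous (ext0 p)) |
      apply (ex_derive_continuous (ext0 v))]; eexists; eauto.
Qed.

Lemma Hb_region_closed s : 0 < s -> Rbar_lt s T ->
  (forall u, 0 <= u < s -> in_Hb_region (ext0 p u) (ext0 v u)) ->
  in_Hb_region (ext0 p s) (ext0 v s).
Proof.
  intros Hs HsT Hbelow.
  destruct (solution_continuity s ltac:(lra) HsT) as [Hcp Hcv].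
  assert (Hve : 0 <= ext0 v s).
  { apply (continuity_pt_ge0_of_left _ 0); [lra | exact Hcv |].
    intros u Hu; apply Rlt_le, Hbelow, Hu. }
  assert (Hpe : 0 <= ext0 p s).
  { apply (continuity_pt_ge0_of_left _ 0); [lra | exact Hcp |].
    intros u Hu; apply Rlt_le, Hbelow, Hu. }
  assert (HHe : 0 <= Hb (ext0 p s) (ext0 v s)).
  { apply (continuity_pt_ge0_of_left (fun u => Hb (ext0 p u) (ext0 v u)) 0); [lra| |].
    - apply Hb_continuity; auto.
    - intros u Hu; apply Hbelow, Hu. }
  assert (Hvs : ext0 v s <> 0).
  { rewrite ext0_pos by lra. destruct Hsol as [_ [Hnz _]]. apply Hnz; auto; lra. }
  assert (Hps : ext0 p s <> 0).
  { intros Hz. rewrite Hz in HHe. unfold Hb, bnd_num in HHe. nra. }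
  repeat split; lra.
Qed.

(* On the boundary [Hb = 0] the flow points strictly inward ([Hb_flow_gt0]). *)
Lemma Hb_region_right s : 0 <= s -> Rbar_lt s T -> in_Hb_region (ext0 p s) (ext0 v s) ->
  at_right s (fun u => in_Hb_region (ext0 p u) (ext0 v u)).
Proof.
  intros Hs HsT [Hvs [Hps HHs]].
  destruct (solution_continuity s Hs HsT) as [Hcp Hcv].
  assert (HHc := Hb_continuity _ _ s Hcp Hcv).
  assert (Hder : at_right s (fun x => is_derive (fun u => Hb (ext0 p u) (ext0 v u)) x
                                        (Hb_flow (ext0 p x) (ext0 v x)))).
  { eapply filter_imp; [|exact (at_right_Rbar_lt s T Hs HsT)].
    intros x [Hx HxT]. destruct (solution_derive x Hx HxT) as [Dp Dv].
    exact (Hb_derive _ _ _ _ _ Dp Dv). }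
  assert (HHnear : at_right s (fun u => 0 <= Hb (ext0 p u) (ext0 v u))).
  { destruct (Rle_lt_dec (Hb (ext0 p s) (ext0 v s)) 0) as [Hz|Hpos].
    - eapply filter_imp; [|apply (at_right_gt_of_deriv_pos _ _ s Hder HHc)].
      + intros u Hu. simpl in Hu. lra.
      + apply Hb_flow_continuity; auto; lra.
      + apply Hb_flow_gt0; auto; lra.
    - apply filter_le_within.
      eapply filter_imp; [|exact (continuity_pt_locally_gt0 _ s HHc Hpos)].
      intros u Hu; simpl in Hu; lra. }
  assert (Hpos : at_right s (fun u => 0 < ext0 v u /\ 0 < ext0 p u)).
  { apply filter_le_within, filter_and; apply continuity_pt_locally_gt0; auto. }
  eapply filter_imp; [|exact (filter_and _ _ Hpos HHnear)].
  intros u [[H1 H2] H3]. repeat split; auto.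
Qed.

Lemma Omega_b_invariant t : 0 <= t -> Rbar_lt t T -> in_Hb_region (p t) (v t).
Proof.
  intros Ht HtT.
  destruct (in_Omega_b_Hb _ _ Hom) as [Hv0 [Hp0 HH0]].
  enough (H : in_Hb_region (ext0 p t) (ext0 v t)) by (rewrite !ext0_pos in H by lra; exact H).
  apply (real_induction (fun u => in_Hb_region (ext0 p u) (ext0 v u)) t); [lra | | | | lra].
  - rewrite !ext0_pos by lra. repeat split; lra.
  - intros s Hs Hbelow.
    apply Hb_region_closed; auto; [lra | apply (Rbar_lt_of_le _ t); auto; lra].
  - intros s Hs Hupto.
    apply Hb_region_right; [lra | apply (Rbar_lt_of_le _ t); auto; lra | apply Hupto; lra].
Qed.

Lemma Hb_gt0 t : 0 < t -> Rbar_lt t T -> 0 < Hb (p t) (v t).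
Proof.
  intros Ht HtT.
  destruct (Omega_b_invariant t) as [Hv [Hp HH]]; [lra|auto|].
  destruct (Rle_lt_dec (Hb (p t) (v t)) 0) as [Hz|]; auto.
  destruct (solution_derive t Ht HtT) as [Dp Dv].
  pose proof (Hb_derive _ _ _ _ _ Dp Dv) as DH. rewrite !ext0_pos in DH by lra.
  destruct (lt_left_of_deriv_pos _ _ _ DH (Hb_flow_gt0 _ _ Hv Hp ltac:(lra))) as [d [Hd0 Hdd]].
  set (s := Rmax (t / 2) (t - d / 2)).
  assert (Hs1 : t / 2 <= s) by apply Rmax_l. assert (Hs2 : t - d / 2 <= s) by apply Rmax_r.
  assert (Hs3 : s < t) by (apply Rmax_lub_lt; lra).
  specialize (Hdd s ltac:(lra)). rewrite !ext0_pos in Hdd by lra.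
  destruct (Omega_b_invariant s) as [_ [_ Hs]]; [lra | apply (Rbar_lt_of_le _ t); auto; lra |].
  lra.
Qed.

Lemma p_increasing a b : 0 <= a -> a < b -> Rbar_lt b T -> p a < p b.
Proof.
  intros Ha Hab HbT.
  assert (HxT : forall x, x <= b -> Rbar_lt x T) by (intros; apply (Rbar_lt_of_le _ b); auto).
  rewrite <- (ext0_pos p a), <- (ext0_pos p b) by lra.
  apply (incr_of_deriv_pos _ (fun x => Fp (ext0 p x) (ext0 v x))); auto.
  - intros x Hx. apply solution_derive; [|apply HxT]; lra.
  - intros x Hx. apply solution_continuity; [|apply HxT]; lra.
  - intros x Hx. rewrite !ext0_pos by lra.
    destruct (Omega_b_invariant x) as [Hv [Hp HH]]; [lra | apply HxT; lra |].
    pose proof (Fp_sub_logistic (p x) (v x) Hv).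
    assert (0 <= p x * Hb (p x) (v x) / (2 * v x))
      by (apply Rmult_le_pos; [nra | apply Rlt_le, Rinv_0_lt_compat; lra]).
    unfold lam, mu in *. nra.
Qed.

Lemma solution_range t : 0 <= t -> Rbar_lt t T -> p 0 <= p t /\ 0 < p t /\ 0 < v t < 1.
Proof.
  intros Ht HtT.
  destruct (Omega_b_invariant t Ht HtT) as [Hv [Hp HH]].
  destruct (Hb_ge0_bnd_den_gt0 _ _ Hv Hp HH) as [_ Hv1].
  repeat split; auto.
  destruct (Req_dec t 0) as [->|Hne]; [lra|]. apply Rlt_le, p_increasing; auto; lra.
Qed.

(* [Ulog] is constant along solutions of the logistic equation [p' = p (lam p + mu)],
   and [Fp] strictly exceeds that right-hand side in the interior of [Omega_b]. *)
Lemma Ulog_decreasing a b : 0 <= a -> a < b -> Rbar_lt b T -> Ulog p b < Ulog p a.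
Proof.
  intros Ha Hab HbT.
  assert (HxT : forall x, x <= b -> Rbar_lt x T) by (intros; apply (Rbar_lt_of_le _ b); auto).
  enough (Key : - Ulog (ext0 p) a < - Ulog (ext0 p) b)
    by (unfold Ulog in *; rewrite !ext0_pos in Key by lra; lra).
  apply (incr_of_deriv_pos (fun x => - Ulog (ext0 p) x)
      (fun x => exp (mu * x) / ext0 p x ^ 2 *
                (Fp (ext0 p x) (ext0 v x) - ext0 p x * (lam * ext0 p x + mu)))); auto.
  - intros x Hx. destruct (solution_derive x ltac:(lra) (HxT x ltac:(lra))) as [Dp _].
    destruct (Omega_b_invariant x) as [_ [Hp _]]; [lra | apply HxT; lra |].
    rewrite ext0_pos in Dp |- * by lra.
    unfold Ulog. auto_derive.
    + repeat split; [eexists; eauto | rewrite ext0_pos by lra; lra].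
    + change (fun y => ext0 p y) with (ext0 p).
      rewrite (is_derive_unique _ _ _ Dp), !ext0_pos by lra. unfold mu, lam. field. lra.
  - intros x Hx. destruct (solution_continuity x ltac:(lra) (HxT x ltac:(lra))) as [Cp _].
    destruct (Omega_b_invariant x) as [_ [Hp _]]; [lra | apply HxT; lra |].
    assert (ext0 p x <> 0) by (rewrite ext0_pos by lra; lra).
    unfold Ulog. reg.
  - intros x Hx. rewrite !ext0_pos by lra.
    destruct (Omega_b_invariant x) as [Hv [Hp _]]; [lra | apply HxT; lra |].
    pose proof (Hb_gt0 x ltac:(lra) (HxT x ltac:(lra))).
    rewrite (Fp_sub_logistic _ _ Hv).
    apply Rmult_lt_0_compat; [apply Rdiv_lt_0_compat; [apply exp_pos | nra]|].
    apply Rdiv_lt_0_compat; nra.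
Qed.

Lemma Ulog_0 : Ulog p 0 = / (mu * (p 0 / (lam * p 0 + mu))).
Proof.
  destruct (in_Omega_b_Hb _ _ Hom) as [_ [Hp0 _]].
  unfold Ulog. rewrite Rmult_0_r, exp_0. unfold lam, mu. field. lra.
Qed.

Lemma p_lower_bound : let D := p 0 / (lam * p 0 + mu) in
  forall t, 0 < t -> Rbar_lt (Finite t) T ->
     0 < 1 - lam * D * exp (mu * t) /\
     p t > mu * D * exp (mu * t) / (1 - lam * D * exp (mu * t)).
Proof.
  intros D t Ht HtT.
  destruct (in_Omega_b_Hb _ _ Hom) as [_ [Hp0 _]].
  destruct (Omega_b_invariant t) as [_ [Hpt _]]; [lra|auto|].
  pose proof (Ulog_decreasing 0 t ltac:(lra) Ht HtT) as HU.
  rewrite Ulog_0 in HU. fold D in HU. unfold Ulog in HU.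
  assert (HD : 0 < D) by (unfold D, lam, mu; apply Rdiv_lt_0_compat; lra).
  set (E := exp (mu * t)) in *. assert (HE : 0 < E) by apply exp_pos.
  assert (Hk : D * E * mu / p t + lam * D * E < 1).
  { apply (Rmult_lt_compat_l (mu * D)) in HU; [|unfold mu; nra].
    rewrite Rinv_r in HU by (unfold mu; nra).
    replace (D * E * mu / p t + lam * D * E) with (mu * D * ((/ p t + lam / mu) * E))
      by (unfold mu; field; lra). auto. }
  assert (Hq : 0 < D * E * mu / p t) by (apply Rdiv_lt_0_compat; auto; unfold mu; nra).
  split; [lra|].
  apply Rlt_gt, (Rmult_lt_reg_r ((1 - lam * D * E) / p t)); [apply Rdiv_lt_0_compat; lra|].
  replace (mu * D * E / (1 - lam * D * E) * ((1 - lam * D * E) / p t)) with (D * E * mu / p t)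
    by (field; lra).
  replace (p t * ((1 - lam * D * E) / p t)) with (1 - lam * D * E) by (field; lra).
  lra.
Qed.

Lemma Ulog_gt_exp t : 0 <= t -> Rbar_lt t T -> lam / mu * exp (mu * t) < Ulog p t.
Proof.
  intros Ht HtT. destruct (Omega_b_invariant t Ht HtT) as [_ [Hp _]].
  unfold Ulog. assert (0 < / p t) by (apply Rinv_0_lt_compat; auto).
  pose proof (exp_pos (mu * t)). nra.
Qed.

(* [Ulog] bounds [exp (mu t)] from above, with a margin once [t] is past any [t1 > 0]. *)
Lemma existence_time_finite : let D := p 0 / (lam * p 0 + mu) in
  exists Tf, T = Finite Tf /\ 0 < Tf < - (/ mu) * ln (lam * D).
Proof.
  intros D.
  destruct (in_Omega_b_Hb _ _ Hom) as [_ [Hp0 _]].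
  assert (HD : 0 < D) by (unfold D, lam, mu; apply Rdiv_lt_0_compat; lra).
  assert (HT0 : Rbar_lt 0 T) by (destruct Hsol; auto).
  set (t1 := match T with Finite Tf => Tf / 2 | _ => 1 end).
  assert (Ht1 : 0 < t1 /\ Rbar_lt t1 T) by (unfold t1; destruct T; simpl in *; lra).
  destruct Ht1 as [Ht1 Ht1T].
  set (K := mu * Ulog p t1 / lam).
  assert (HKlt : K < / (lam * D)).
  { pose proof (Ulog_decreasing 0 t1 ltac:(lra) Ht1 Ht1T) as HU. rewrite Ulog_0 in HU.
    unfold K. apply (Rmult_lt_reg_l (lam / mu)); [unfold lam, mu; lra|].
    replace (lam / mu * (mu * Ulog p t1 / lam)) with (Ulog p t1) by (unfold lam, mu; field).
    replace (lam / mu * / (lam * D)) with (/ (mu * D)) by (unfold lam, mu; field; lra). auto. }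
  assert (HK : 0 < K).
  { pose proof (Ulog_gt_exp t1 ltac:(lra) Ht1T). pose proof (exp_pos (mu * t1)).
    unfold K, lam, mu in *. lra. }
  assert (Hbound : forall t, t1 <= t -> Rbar_lt t T -> t < ln K / mu).
  { intros t Ht HtT.
    assert (HUt : Ulog p t <= Ulog p t1).
    { destruct (Req_dec t t1) as [->|Hne]; [lra|]. apply Rlt_le, Ulog_decreasing; auto; lra. }
    pose proof (Ulog_gt_exp t ltac:(lra) HtT).
    assert (Hex : exp (mu * t) < K) by (unfold K, lam, mu in *; lra).
    apply ln_increasing in Hex; [|apply exp_pos]. rewrite ln_exp in Hex.
    unfold mu in *. lra. }
  assert (HlnK : ln K / mu < - (/ mu) * ln (lam * D)).
  { replace (- / mu * ln (lam * D)) with (ln (/ (lam * D)) / mu)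
      by (rewrite ln_Rinv by (unfold lam; nra); unfold mu; field).
    apply ln_increasing in HKlt; auto. unfold mu. lra. }
  destruct T as [Tf| |]; simpl in *; try contradiction.
  - exists Tf; split; auto. split; [lra|].
    destruct (Rle_lt_dec Tf (ln K / mu)); [lra|].
    specialize (Hbound (Rmax t1 ((ln K / mu + Tf) / 2))).
    pose proof (Rmax_l t1 ((ln K / mu + Tf) / 2)). pose proof (Rmax_r t1 ((ln K / mu + Tf) / 2)).
    assert (Rmax t1 ((ln K / mu + Tf) / 2) < Tf) by (apply Rmax_lub_lt; unfold t1 in *; lra).
    specialize (Hbound ltac:(lra) ltac:(simpl; lra)). lra.
  - exfalso. specialize (Hbound (Rmax t1 (ln K / mu + 1))).
    pose proof (Rmax_l t1 (ln K / mu + 1)). pose proof (Rmax_r t1 (ln K / mu + 1)).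
    specialize (Hbound ltac:(lra) I). lra.
Qed.

End Solution.

(** * Blow-up *)

Lemma Rf_Qf_bound b1 b2 b : 0 < b1 -> b1 <= b <= b2 ->
  - ((/ b1 + b2) / 2) <= Rf b <= (/ b1 + b2) / 2 /\ 0 <= Qf b <= (/ b1 + b2) / 2.
Proof.
  intros Hb1 Hb. assert (0 < / b <= / b1) by (split; [apply Rinv_0_lt_compat | apply Rinv_le_contravar]; lra).
  unfold Rf, Qf. lra.
Qed.

Lemma lin_comb_abs_le X Y u w L : Rabs X <= L -> Rabs Y <= L ->
  Rabs (X * u + Y * w) <= L * (Rabs u + Rabs w).
Proof.
  intros HX HY. eapply Rle_trans; [apply Rabs_triang|]. rewrite !Rabs_mult.
  pose proof (Rabs_pos u). pose proof (Rabs_pos w). nra.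
Qed.

Lemma Fp_Fv_bounded a2 b1 b2 : 0 <= a2 -> 0 < b1 <= b2 ->
  exists M, 0 < M /\ forall a b, 0 <= a <= a2 -> b1 <= b <= b2 ->
    Rabs (Fp a b) <= M /\ Rabs (Fv a b) <= M.
Proof.
  intros Ha2 Hb. set (S := (/ b1 + b2) / 2).
  assert (HS : 0 < S) by (pose proof (Rinv_0_lt_compat b1 ltac:(lra)); unfold S; lra).
  assert (HR := fun b => Rf_Qf_bound b1 b2 b ltac:(lra)). fold S in HR.
  exists (a2 * (a2 * S + S) + a2 * (1 + b2 ^ 2) / 4 + (1 + b2 ^ 2) / 2 + 1).
  split.
  - nra.
  - intros a b Ha Hb'. destruct (HR b Hb') as [[R1 R2] [Q1 Q2]].
    split; apply Rabs_le; unfold Fp, Fv.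
    + assert (- S * (a2 + 1) <= a * Rf b - Qf b <= a2 * S) by (split; nra).
      assert (a * (a * Rf b - Qf b) <= a2 * (a2 * S)).
      { apply Rle_trans with (a * (a2 * S)); [apply Rmult_le_compat_l; lra|].
        apply Rmult_le_compat_r; nra. }
      assert (- (a2 * (S * (a2 + 1))) <= a * (a * Rf b - Qf b)).
      { apply Rle_trans with (a * (- S * (a2 + 1))); [nra | apply Rmult_le_compat_l; lra]. }
      assert (0 <= b2 ^ 2) by nra. split; nra.
    + assert (b ^ 2 <= b2 ^ 2) by nra. assert (0 <= b ^ 2) by nra.
      assert (0 <= a * (1 + b ^ 2) <= a2 * (1 + b2 ^ 2)) by (split; nra).
      assert (0 <= a2 * (a2 * S + S)) by nra.
      split; nra.
Qed.

(* The differences are written as [X (a - a') + Y (b - b')] with [X], [Y] bounded on the box. *)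
Lemma Fp_Fv_lipschitz a2 b1 b2 : 0 <= a2 -> 0 < b1 <= b2 ->
  exists L, 0 < L /\ forall a b a' b', 0 <= a <= a2 -> b1 <= b <= b2 ->
    0 <= a' <= a2 -> b1 <= b' <= b2 ->
    Rabs (Fp a b - Fp a' b') <= L * (Rabs (a - a') + Rabs (b - b')) /\
    Rabs (Fv a b - Fv a' b') <= L * (Rabs (a - a') + Rabs (b - b')).
Proof.
  intros Ha2 Hb. set (S := (/ b1 + b2) / 2).
  assert (HS : 0 < S) by (pose proof (Rinv_0_lt_compat b1 ltac:(lra)); unfold S; lra).
  assert (HR := fun b => Rf_Qf_bound b1 b2 b ltac:(lra)). fold S in HR.
  set (ib2 := / b1 ^ 2). assert (Hib2 : 0 <= ib2) by (apply Rlt_le, Rinv_0_lt_compat; nra).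
  exists ((2 * a2 * S + S) + (a2 ^ 2 + a2) * (ib2 + 1) + (1 + b2 ^ 2) / 4
          + 2 * b2 * (a2 / 4 + 1 / 2) + 1).
  split.
  - nra.
  - intros a b a' b' Ha Hbb1 Ha' Hbb2.
    destruct (HR b Hbb1) as [[R1 R2] [Q1 Q2]].
    assert (Hbb : 0 < / (b * b') <= ib2).
    { split; [apply Rinv_0_lt_compat; nra | apply Rinv_le_contravar; nra]. }
    assert (0 <= S) by lra.
    split.
    + replace (Fp a b - Fp a' b') with
        (((a + a') * Rf b - Qf b) * (a - a') +
         (- a' ^ 2 * (/ (b * b') + 1) / 2 - a' * (1 - / (b * b')) / 2) * (b - b'))
        by (unfold Fp, Rf, Qf; field; lra).
      set (u := / (b * b')) in *.
      assert (0 <= (1 + b2 ^ 2) / 4 + 2 * b2 * (a2 / 4 + 1 / 2)) by nra.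
      assert (0 <= (a2 ^ 2 + a2) * (ib2 + 1)) by nra.
      assert (HX : - (2 * a2 * S + S) <= (a + a') * Rf b - Qf b <= 2 * a2 * S + S).
      { assert (0 <= a + a' <= 2 * a2) by lra. split; nra. }
      assert (HY : - ((a2 ^ 2 + a2) * (ib2 + 1)) <= - a' ^ 2 * (u + 1) / 2 - a' * (1 - u) / 2
                   <= (a2 ^ 2 + a2) * (ib2 + 1)).
      { assert (0 <= a' ^ 2 <= a2 ^ 2) by (split; nra).
        assert (0 <= a' ^ 2 * (u + 1) <= a2 ^ 2 * (ib2 + 1)) by (split; nra).
        assert (- (a2 * ib2) <= a' * (1 - u) <= a2) by (split; nra).
        split; nra. }
      apply lin_comb_abs_le; apply Rabs_le; lra.
    + replace (Fv a b - Fv a' b') with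
        ((- (1 + b ^ 2) / 4) * (a - a') + (- (a' / 4) * (b + b') - (b + b') / 2) * (b - b'))
        by (unfold Fv; field).
      assert (0 <= (2 * a2 * S + S) + (a2 ^ 2 + a2) * (ib2 + 1)) by nra.
      apply lin_comb_abs_le; apply Rabs_le; split; nra.
Qed.

Lemma Fp_Fv_lipschitz_field a1 a2 b1 b2 : 0 <= a1 <= a2 -> 0 < b1 <= b2 ->
  exists L M, lipschitz_field Fp Fv a1 a2 b1 b2 L M.
Proof.
  intros Ha Hb.
  destruct (Fp_Fv_lipschitz a2 b1 b2 ltac:(lra) Hb) as [L [HL HLip]].
  destruct (Fp_Fv_bounded a2 b1 b2 ltac:(lra) Hb) as [M [HM HBd]].
  exists L, M. constructor; auto.
  - intros f g t Hf Hg [_ Hgt]. assert (g t <> 0) by lra.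
    split; unfold Fp, Fv, Rf, Qf; reg.
  - intros a b [Ha' Hb']. apply HBd; lra.
  - intros a b a' b' [Ha' Hb'] [Ha'' Hb'']. apply HLip; lra.
Qed.

(* [Fp/p + k Fv/v = N/v] where [N(0) >= 0] thanks to [k p <= k Mp = p0 - 1 <= p - 1],
   so the [1/v] singularity cancels and [N >= - C v^2]. *)
Lemma log_flow_lower_bound (p v p0 Mp : R) : 1 < p0 -> p0 <= p <= Mp -> 0 < v < 1 ->
  let k := (p0 - 1) / Mp in
  - ((Mp + 1) / 2 + k * (Mp / 4 + 1 / 2)) <= Fp p v / p + k * (Fv p v / v).
Proof.
  intros Hp0 Hp Hv k.
  assert (Hk : 0 < k) by (unfold k; apply Rdiv_lt_0_compat; lra).
  assert (HkM : k * Mp = p0 - 1) by (unfold k; field; lra).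
  set (C1 := (Mp + 1) / 2 + k * (Mp / 4 + 1 / 2)).
  set (N := (p * (1 - v ^ 2) - (1 + v ^ 2)) / 2 + k * (- p * (1 + v ^ 2) / 4 + (1 - v ^ 2) / 2)).
  replace (Fp p v / p + k * (Fv p v / v)) with (N / v) by (unfold N, Fp, Fv, Rf, Qf; field; lra).
  assert (HN : - C1 * v ^ 2 <= N).
  { unfold N, C1.
    assert (k * p <= p0 - 1) by nra.
    assert ((p + 1) / 2 + k * (p / 4 + 1 / 2) <= (Mp + 1) / 2 + k * (Mp / 4 + 1 / 2)) by nra.
    assert (0 <= (p - 1) / 2 - k * p / 4 + k / 2) by nra.
    nra. }
  assert (0 < C1) by (unfold C1; nra).
  apply (Rmult_le_reg_r v); [lra|]. unfold Rdiv. rewrite Rmult_assoc, Rinv_l, Rmult_1_r by lra.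
  assert (C1 * v ^ 2 <= C1 * v) by (apply Rmult_le_compat_l; [lra | simpl; nra]). lra.
Qed.

Section BoundedSolution.

Variables (p v : R -> R) (Tf Mp : R).
Hypothesis Hsol : is_solution p v (Finite Tf).
Hypothesis Hom : in_Omega_b (v 0) (p 0).
Hypothesis HMp : forall t, 0 <= t < Tf -> p t <= Mp.

Lemma bounded_solution_range t : 0 <= t < Tf -> p 0 <= p t <= Mp /\ 0 < p t /\ 0 < v t < 1.
Proof.
  intros Ht. destruct (solution_range p v _ Hsol Hom t) as [H1 [H2 H3]]; [lra | simpl; lra |].
  repeat split; auto; try apply HMp; lra.
Qed.

Lemma log_potential_ge :
  let k := (p 0 - 1) / Mp in
  let C1 := (Mp + 1) / 2 + k * (Mp / 4 + 1 / 2) in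
  forall t, 0 <= t < Tf -> ln (p 0) + k * ln (v 0) - C1 * t <= ln (p t) + k * ln (v t).
Proof.
  intros k C1 t Ht.
  destruct (in_Omega_b_Hb _ _ Hom) as [Hv0 [Hp0 _]].
  assert (HMp0 : p 0 <= Mp) by (apply bounded_solution_range; lra).
  set (W := fun t => ln (ext0 p t) + k * ln (ext0 v t)).
  enough (W 0 + - C1 * (t - 0) <= W t) by (unfold W in *; rewrite !ext0_pos in * by lra; lra).
  destruct (Req_dec t 0) as [->|Hne]; [lra|].
  assert (HxT : forall x, 0 <= x <= t -> Rbar_lt x (Finite Tf)) by (intros; simpl; lra).
  apply (ge_lin_of_deriv_ge W (fun x => Fp (ext0 p x) (ext0 v x) / ext0 p x
                                      + k * (Fv (ext0 p x) (ext0 v x) / ext0 v x))); [lra | | |].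
  - intros x Hx. destruct (solution_derive p v _ Hsol x ltac:(lra) (HxT x ltac:(lra))) as [Dp Dv].
    destruct (bounded_solution_range x ltac:(lra)) as [_ [Hpx [Hvx _]]].
    unfold W. auto_derive.
    + repeat split; try (eexists; eassumption); rewrite ext0_pos; lra.
    + change (fun y => ext0 p y) with (ext0 p). change (fun y => ext0 v y) with (ext0 v).
      rewrite (is_derive_unique _ _ _ Dp), (is_derive_unique _ _ _ Dv), !ext0_pos by lra.
      field. lra.
  - intros x Hx. destruct (solution_continuity p v _ Hsol x ltac:(lra) (HxT x ltac:(lra))) as [Cp Cv].
    destruct (bounded_solution_range x ltac:(lra)) as [_ [Hpx [Hvx _]]].
    unfold W. apply continuity_pt_plus; [|apply continuity_pt_scal];
      apply (continuity_pt_comp _ ln); auto; apply derivable_continuous_pt;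
      [exists (/ ext0 p x) | exists (/ ext0 v x)]; apply derivable_pt_lim_ln;
      rewrite ext0_pos; lra.
  - intros x Hx. rewrite !ext0_pos by lra.
    apply log_flow_lower_bound; try lra; apply bounded_solution_range; lra.
Qed.

Lemma v_bounded_below : exists vlo, 0 < vlo /\ forall t, 0 <= t < Tf -> vlo <= v t.
Proof.
  destruct (in_Omega_b_Hb _ _ Hom) as [Hv0 [Hp0 _]].
  assert (HMp0 : p 0 <= Mp)
    by (destruct Hsol as [HT _]; apply bounded_solution_range; simpl in HT; lra).
  pose proof log_potential_ge as HW. simpl in HW.
  set (k := (p 0 - 1) / Mp) in HW.
  set (C1 := (Mp + 1) / 2 + k * (Mp / 4 + 1 / 2)) in HW.
  assert (Hk : 0 < k) by (unfold k; apply Rdiv_lt_0_compat; lra).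
  assert (HC1 : 0 < C1) by (unfold C1; nra).
  exists (exp ((ln (p 0) + k * ln (v 0) - C1 * Tf - ln Mp) / k)). split; [apply exp_pos|].
  intros t Ht. destruct (bounded_solution_range t Ht) as [[Hpt1 Hpt2] [Hpt [Hvt _]]].
  specialize (HW t Ht).
  assert (Hlnp : ln (p t) <= ln Mp).
  { destruct (Req_dec (p t) Mp) as [->|Hne]; [lra|]. apply Rlt_le, ln_increasing; lra. }
  assert (Hm : (ln (p 0) + k * ln (v 0) - C1 * Tf - ln Mp) / k <= ln (v t)).
  { apply (Rmult_le_reg_r k); auto. unfold Rdiv. rewrite Rmult_assoc, Rinv_l, Rmult_1_r by lra.
    assert (C1 * t <= C1 * Tf) by (apply Rmult_le_compat_l; lra). lra. }
  rewrite <- (exp_ln (v t)) by lra.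
  destruct (Rle_lt_or_eq_dec _ _ Hm) as [Hlt| ->]; [apply Rlt_le, exp_increasing, Hlt | lra].
Qed.

End BoundedSolution.

Definition glue (f g : R -> R) (c t : R) : R := if Rlt_dec t c then f t else g t.

Lemma glue_left (f g : R -> R) c t : t < c -> glue f g c t = f t.
Proof. intros H. unfold glue. destruct (Rlt_dec t c); [auto | lra]. Qed.

Lemma glue_right (f g : R -> R) c t : c <= t -> glue f g c t = g t.
Proof. intros H. unfold glue. destruct (Rlt_dec t c); [lra | auto]. Qed.

Lemma is_solution_glue (p v X Y : R -> R) (Tf t0 t2 : R) :
  is_solution p v (Finite Tf) -> 0 < t0 < Tf -> Tf < t2 ->
  (forall t, t0 <= t < Tf -> p t = X t /\ v t = Y t) ->
  (forall t, Tf <= t < t2 -> Y t <> 0) ->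
  (forall t, t0 < t < t2 -> is_derive X t (Fp (X t) (Y t)) /\ is_derive Y t (Fv (X t) (Y t))) ->
  is_solution (glue p X Tf) (glue v Y Tf) (Finite t2).
Proof.
  intros [_ [Hvnz [Hd [Hp0 Hv0]]]] Ht0 Ht2 Hagree HY HXY.
  assert (Hleft : forall t, t < Tf -> locally t (fun s => glue p X Tf s = p s /\ glue v Y Tf s = v s)).
  { intros t Ht. eapply filter_imp; [|apply (locally_in_interval (t - 1) Tf t); lra].
    intros s Hs. rewrite !glue_left by lra. auto. }
  assert (Hright : forall t, Tf <= t < t2 ->
            locally t (fun s => glue p X Tf s = X s /\ glue v Y Tf s = Y s)).
  { intros t Ht. eapply filter_imp; [|apply (locally_in_interval t0 t2 t); lra].
    intros s Hs. destruct (Rlt_le_dec s Tf).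
    - rewrite !glue_left by lra. apply Hagree; lra.
    - rewrite !glue_right by lra. auto. }
  split; [simpl; lra|]. split; [|split; [|split]].
  - intros t Ht Htt. simpl in Htt. destruct (Rlt_le_dec t Tf).
    + rewrite glue_left by lra. apply Hvnz; simpl; auto.
    + rewrite glue_right by lra. apply HY; lra.
  - intros t Ht Htt. simpl in Htt. destruct (Rlt_le_dec t Tf) as [Hlt|Hge].
    + rewrite !glue_left by lra. destruct (Hd t Ht) as [D1 D2]; [simpl; auto|].
      split; (eapply is_derive_ext_loc; [|eassumption]);
        (eapply filter_imp; [|exact (Hleft t Hlt)]); intros s [Hs1 Hs2]; auto.
    + rewrite !glue_right by lra. destruct (HXY t) as [D1 D2]; [lra|].
      split; (eapply is_derive_ext_loc; [|eassumption]);
        (eapply filter_imp; [|exact (Hright t ltac:(lra))]); intros s [Hs1 Hs2]; auto.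
  - rewrite glue_left by lra. eapply filterlim_ext_loc; [|exact Hp0].
    apply filter_le_within. eapply filter_imp; [|exact (Hleft 0 ltac:(lra))].
    intros s [Hs _]; auto.
  - rewrite glue_left by lra. eapply filterlim_ext_loc; [|exact Hv0].
    apply filter_le_within. eapply filter_imp; [|exact (Hleft 0 ltac:(lra))].
    intros s [_ Hs]; auto.
Qed.

(* A bounded [p] keeps the solution in a compact box where the field is Lipschitz;
   the local solution started just before [Tf] then continues it beyond [Tf]. *)
Lemma maximal_solution_p_unbounded p v Tf Mp :
  is_maximal_solution p v (Finite Tf) -> in_Omega_b (v 0) (p 0) ->
  ~ (forall t, 0 <= t < Tf -> p t <= Mp).
Proof.
  intros [Hsol Hmax] Hom HMp.
  destruct (v_bounded_below p v Tf Mp Hsol Hom HMp) as [vlo [Hvlo Hvl]].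
  destruct (in_Omega_b_Hb _ _ Hom) as [_ [Hp0 _]].
  assert (HTf : 0 < Tf) by (destruct Hsol as [HT _]; exact HT).
  assert (Hrange : forall t, 0 <= t < Tf -> p 0 <= p t <= Mp /\ vlo <= v t < 1).
  { intros t Ht. destruct (bounded_solution_range p v Tf Mp Hsol Hom HMp t Ht) as [H1 [_ H3]].
    repeat split; try apply Hvl; lra. }
  assert (Hvlo1 : vlo < 1) by (destruct (Hrange 0); lra).
  assert (HMp0 : p 0 <= Mp) by (destruct (Hrange 0); lra).
  destruct (Fp_Fv_lipschitz_field (p 0 / 2) (Mp + 1) (vlo / 2) 2) as [L [M HF]]; [lra | lra |].
  pose proof (lf_L_pos _ _ _ _ _ _ _ _ HF). pose proof (lf_M_pos _ _ _ _ _ _ _ _ HF).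
  pose proof (Rmin_l (p 0 / 2) (vlo / 2)). pose proof (Rmin_r (p 0 / 2) (vlo / 2)).
  set (r := Rmin (p 0 / 2) (vlo / 2)) in *.
  assert (Hr : 0 < r) by (apply Rmin_glb_lt; lra).
  pose proof (Rmin_l (r / M) (/ (4 * L))). pose proof (Rmin_r (r / M) (/ (4 * L))).
  set (h := Rmin (r / M) (/ (4 * L))) in *.
  assert (Hh : 0 < h) by (apply Rmin_glb_lt; [apply Rdiv_lt_0_compat | apply Rinv_0_lt_compat]; lra).
  assert (HMh : M * h <= r).
  { apply Rle_trans with (M * (r / M)); [apply Rmult_le_compat_l; lra | right; field; lra]. }
  assert (HLh : 4 * L * h <= 1).
  { apply Rle_trans with (4 * L * / (4 * L)); [apply Rmult_le_compat_l; lra | right; field; lra]. }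
  pose proof (Rmax_l (Tf / 2) (Tf - h / 2)). pose proof (Rmax_r (Tf / 2) (Tf - h / 2)).
  set (t0 := Rmax (Tf / 2) (Tf - h / 2)) in *.
  assert (Ht0 : t0 < Tf) by (apply Rmax_lub_lt; lra).
  destruct (Hrange t0 ltac:(lra)).
  destruct (picard_lindelof Fp Fv _ _ _ _ L M t0 h (p t0) (v t0) r HF Hr Hh HMh HLh)
    as [X [Y [Hbox [Hder Huniq]]]]; try lra.
  assert (Hagree : forall t, t0 <= t < Tf -> p t = X t /\ v t = Y t).
  { apply (Huniq p v Tf); auto; [lra|]. intros t Ht. destruct (Hrange t ltac:(lra)).
    destruct Hsol as [_ [_ [Hd _]]].
    split; [unfold in_box; lra | apply Hd; simpl; lra]. }
  apply (Hmax (Finite (t0 + h)) (glue p X Tf) (glue v Y Tf)); [simpl; lra | |].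
  - apply (is_solution_glue p v X Y Tf t0); auto; try lra.
    intros t _. destruct (Hbox t) as [_ HYt]. lra.
  - intros t Ht Htt. rewrite !glue_left by (simpl in Htt; lra). auto.
Qed.

Lemma Nl2_ge p v : 0 < p -> 0 < v -> p <= Nl2 p v.
Proof.
  intros Hp Hv. unfold Nl2. pose proof PI2_3_2.
  assert (Hinv : 2 <= / v + v).
  { replace (/ v + v) with (2 + (1 - v) ^ 2 / v) by (field; lra).
    assert (0 <= (1 - v) ^ 2 / v) by (apply Rdiv_le_0_compat; [apply pow2_ge_0 | lra]). lra. }
  rewrite <- (sqrt_pow2 p) at 1 by lra. apply sqrt_le_1_alt.
  assert (0 <= p ^ 2) by nra.
  assert (2 * PI * p ^ 2 * 2 <= 2 * PI * p ^ 2 * (/ v + v)) by (apply Rmult_le_compat_l; nra).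
  nra.
Qed.

Lemma Nwiener_ge p v : 0 < p -> 0 < v -> p <= Nwiener p v.
Proof.
  intros Hp Hv. unfold Nwiener. rewrite Rabs_right by lra.
  assert (1 <= Rmax (/ v) v).
  { destruct (Rle_lt_dec v 1).
    - eapply Rle_trans; [|apply Rmax_l]. rewrite <- Rinv_1. apply Rinv_le_contravar; lra.
    - eapply Rle_trans; [|apply Rmax_r]. lra. }
  nra.
Qed.

Lemma at_left_interval (Tf : R) : 0 < Tf -> at_left Tf (fun t => 0 < t < Tf).
Proof.
  intros HTf. exists (mkposreal Tf HTf). intros y Hy Hylt. rewrite ball_Rabs in Hy.
  apply Rabs_def2 in Hy. simpl in Hy. lra.
Qed.

(* [p] increases, and a maximal solution cannot keep it bounded. *)
Lemma p_blowup p v Tf : is_maximal_solution p v (Finite Tf) -> in_Omega_b (v 0) (p 0) ->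
  filterlim p (at_left Tf) (Rbar_locally p_infty).
Proof.
  intros Hmax Hom P [M HP].
  destruct (classic (exists t, 0 <= t < Tf /\ M < p t)) as [[t [Ht Hpt]]|Hn].
  - assert (Hd : 0 < Tf - t) by lra.
    exists (mkposreal _ Hd). intros y Hy Hylt. rewrite ball_Rabs in Hy. simpl in Hy.
    apply Rabs_def2 in Hy. apply HP.
    assert (p t < p y) by (apply (p_increasing p v (Finite Tf) (proj1 Hmax) Hom); simpl; lra).
    lra.
  - exfalso. apply (maximal_solution_p_unbounded p v Tf M Hmax Hom).
    intros t Ht. apply Rnot_lt_le. intros Hlt. apply Hn. eauto.
Qed.

Theorem theorem3p9 (p v : R -> R) (T : Rbar) :
  is_maximal_solution p v T ->
  in_Omega_b (v 0) (p 0) ->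
  let D := p 0 / (lam * p 0 + mu) in
  (forall t, 0 < t -> Rbar_lt (Finite t) T ->
     0 < 1 - lam * D * exp (mu * t) /\
     p t > mu * D * exp (mu * t) / (1 - lam * D * exp (mu * t))) /\
  exists tc : R,
    T = Finite tc /\
    0 < tc < - (/ mu) * ln (lam * D) /\
    filterlim p (at_left tc) (Rbar_locally p_infty) /\
    filterlim (fun t => Nl2 (p t) (v t)) (at_left tc) (Rbar_locally p_infty) /\
    filterlim (fun t => Nwiener (p t) (v t)) (at_left tc) (Rbar_locally p_infty).
Proof.
  intros Hmax Hom D. pose proof (proj1 Hmax) as Hsol.
  split; [exact (p_lower_bound p v T Hsol Hom)|].
  destruct (existence_time_finite p v T Hsol Hom) as [Tf [-> HTf]].
  assert (Hblow := p_blowup p v Tf Hmax Hom).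
  assert (Hpos : at_left Tf (fun t => 0 < p t /\ 0 < v t)).
  { eapply filter_imp; [|apply at_left_interval; lra]. intros t Ht.
    destruct (Omega_b_invariant p v _ Hsol Hom t) as [Hv [Hp _]]; [lra | simpl; lra | auto]. }
  exists Tf. split; [reflexivity|]. split; [exact HTf|]. split; [exact Hblow|].
  split; apply (filterlim_ge_p_infty p); auto; (eapply filter_imp; [|exact Hpos]);
    intros t [Hp Hv]; [apply Nl2_ge | apply Nwiener_ge]; auto.
Qed.
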